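(* Let $R=\mathbb{Z}[t]/(t^3)$ and let $p$ be a prime. For complex $s_1,s_2$ with real parts sufficiently large, \[ \zeta_{R,p}(s_1,s_2)=(1-p^{-1})^{-2}\int_{\substack{(x,y,z)\in\mathbb{Z}_p^3\\ |z|^2\le|x|}} |x|^{s_1-2}\,|z|^{s_1-1}\,\max\{|x|,|y|,|z|\}^{s_2-s_1}\,dx\,dy\,dz , \] where $dx\,dy\,dz$ is the Haar measure on $\mathbb{Z}_p^3$ normalized to have total mass $1$, and $|\cdot|$ is the $p$-adic absolute value with $|p|=p^{-1}$.
   Context: Let $R=\mathbb{Z}[t]/(t^3)$, viewed as the additive group $\mathbb{Z}^3$ with basis $t^2,t,1$. A subring $S$ of $R$ means an additive subgroup of finite index that contains $1$ and is closed under multiplication. For a finite-index subgroup $S\subseteq R$ there are unique positive integers $\alpha_1(S),\alpha_2(S),\alpha_3(S)$ with $\alpha_{i+1}\mid\alpha_i$ and $R/S\cong \mathbb{Z}/\alpha_1\mathbb{Z}\oplus\mathbb{Z}/\alpha_2\mathbb{Z}\oplus\mathbb{Z}/\alpha_3\mathbb{Z}$. This tuple is called the cotype of $S$. For a subring $S$ one always has $\alpha_3(S)=1$. For a prime $p$ define \[ \zeta_{R,p}(s_1,s_2)=\sum_{S}\alpha_1(S)^{-s_1}\alpha_2(S)^{-s_2}, \] where the sum runs over all subrings $S$ of $R$ whose index $[R:S]$ is a power of $p$ (including index $1$). *)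

From Stdlib Require Import Reals ZArith Znumtheory List.
From Coquelicot Require Import Coquelicot.
Import ListNotations.

Local Open Scope R_scope.

Definition cexp (z : C) : C :=
  (exp (Re z) * cos (Im z), exp (Re z) * sin (Im z)).

(* r^s for r > 0 (= exp(s ln r)); by convention 0^s = 0 (used only where
   Re s > 0, or where the whole product vanishes). *)
Definition rpowC (r : R) (s : C) : C :=
  if Rle_dec r 0 then RtoC 0 else cexp (Cmult (RtoC (ln r)) s).

Fixpoint vp_fuel (fuel : nat) (p x : Z) : nat :=
  match fuel with
  | O => O
  | S f => if andb (Z.eqb (Z.modulo x p) 0) (negb (Z.eqb x 0))
           then S (vp_fuel f p (Z.div x p)) else O
  end.

(* v_p(x) for x <> 0 *)
Definition vp (p x : Z) : nat := vp_fuel (Z.to_nat (Z.abs x)) p x.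

Definition pabs (p x : Z) : R :=
  if Z.eqb x 0 then 0 else / (IZR p) ^ (vp p x).

Definition csum_list {T : Type} (f : T -> C) (l : list T) : C :=
  fold_right (fun t acc => Cplus (f t) acc) (RtoC 0) l.

Definition csum_nat (N : nat) (f : nat -> C) : C := csum_list f (seq 0 N).

(* Unconditional (net of finite subsets) convergence of a family indexed by
   {t : T | A t} to L. *)
Definition HasSum {T : Type} (A : T -> Prop) (f : T -> C) (L : C) : Prop :=
  forall eps : R, 0 < eps ->
    exists F0 : list T, NoDup F0 /\ (forall t, In t F0 -> A t) /\
      forall F : list T, NoDup F -> (forall t, In t F -> A t) -> incl F0 F ->
        Cmod (Cminus (csum_list f F) L) < eps.

Definition CSeqLim (u : nat -> C) (L : C) : Prop :=
  forall eps : R, 0 < eps -> exists N : nat, forall n : nat, (N <= n)%nat ->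
    Cmod (Cminus (u n) L) < eps.

(* An element a t^2 + b t + c is the triple (a,b,c) (basis t^2, t, 1).
   A subset of R is a predicate S a b c. *)
Definition subsetR := Z -> Z -> Z -> Prop.

(* (a t^2 + b t + c)(a' t^2 + b' t + c') mod t^3 *)
Definition mulR (u v : Z * Z * Z) : Z * Z * Z :=
  let '(a, b, c) := u in let '(a', b', c') := v in
  ((a * c' + b * b' + c * a')%Z, (b * c' + c * b')%Z, (c * c')%Z).

Definition inS (S : subsetR) (u : Z * Z * Z) : Prop :=
  let '(a, b, c) := u in S a b c.

(* additive subgroup, contains 1, closed under multiplication
   (finite index is part of IsCotype below) *)
Definition IsSubringSet (S : subsetR) : Prop :=
  S 0%Z 0%Z 0%Z /\
  (forall a b c a' b' c', S a b c -> S a' b' c' ->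
      S (a + a')%Z (b + b')%Z (c + c')%Z) /\
  (forall a b c, S a b c -> S (- a)%Z (- b)%Z (- c)%Z) /\
  S 0%Z 0%Z 1%Z /\
  (forall u v, inS S u -> inS S v -> inS S (mulR u v)).

(* R/S is isomorphic to Z/a1 (+) Z/a2 (+) Z/a3 with a3 | a2 | a1, all > 0:
   there is a surjective group homomorphism phi : Z^3 -> Z/a1 x Z/a2 x Z/a3
   (given by an integer 3x3 matrix m) whose kernel is exactly S. *)
Definition IsCotype (S : subsetR) (a1 a2 a3 : Z) : Prop :=
  (0 < a3)%Z /\ (a3 | a2)%Z /\ (a2 | a1)%Z /\
  exists m11 m12 m13 m21 m22 m23 m31 m32 m33 : Z,
    let phi1 a b c := (m11 * a + m12 * b + m13 * c)%Z in
    let phi2 a b c := (m21 * a + m22 * b + m23 * c)%Z in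
    let phi3 a b c := (m31 * a + m32 * b + m33 * c)%Z in
    (forall a b c, S a b c <->
        ((a1 | phi1 a b c) /\ (a2 | phi2 a b c) /\ (a3 | phi3 a b c))%Z) /\
    (forall w1 w2 w3, exists a b c,
        ((a1 | phi1 a b c - w1) /\ (a2 | phi2 a b c - w2)
         /\ (a3 | phi3 a b c - w3))%Z).

(* index set of the zeta function: subrings S of p-power index, together
   with their cotype (a1,a2,a3) (which is unique) *)
Definition ZetaIndex (p : Z) (t : subsetR * Z * Z * Z) : Prop :=
  let '(Ssub, a1, a2, a3) := t in
  IsSubringSet Ssub /\ IsCotype Ssub a1 a2 a3 /\
  exists k : nat, (a1 * a2 * a3)%Z = (p ^ Z.of_nat k)%Z.

Definition ZetaTerm (s1 s2 : C) (t : subsetR * Z * Z * Z) : C :=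
  let '(Ssub, a1, a2, a3) := t in
  Cmult (rpowC (IZR a1) (Copp s1)) (rpowC (IZR a2) (Copp s2)).

Definition integrand (p : Z) (s1 s2 : C) (x y z : Z) : C :=
  if Rle_dec (pabs p z ^ 2) (pabs p x) then
    Cmult (Cmult (rpowC (pabs p x) (Cminus s1 (RtoC 2)))
                 (rpowC (pabs p z) (Cminus s1 (RtoC 1))))
          (rpowC (Rmax (pabs p x) (Rmax (pabs p y) (pabs p z))) (Cminus s2 s1))
  else RtoC 0.

(* Riemann sum of level n for the normalized Haar measure on Z_p^3: the
   cosets of p^n Z_p^3 (each of measure p^{-3n}) with representatives
   x,y,z in {0,...,p^n - 1}. *)
Definition RiemannSum (p : Z) (s1 s2 : C) (n : nat) : C :=
  let N := Z.to_nat (p ^ Z.of_nat n) in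
  Cmult (RtoC (/ (IZR p) ^ (3 * n)))
    (csum_nat N (fun i => csum_nat N (fun j => csum_nat N (fun k =>
       integrand p s1 s2 (Z.of_nat i) (Z.of_nat j) (Z.of_nat k))))).

Definition HaarIntegral (p : Z) (s1 s2 : C) (I : C) : Prop :=
  CSeqLim (RiemannSum p s1 s2) I.

From Stdlib Require Import Reals ZArith Znumtheory List.
From Coquelicot Require Import Coquelicot.
From Stdlib Require Import Lia Lra Permutation Classical FunctionalExtensionality PropExtensionality.
Import ListNotations.

(** Write elements of R = Z[t]/(t^3) as x t^2 + y t + z.
  (1) Every subring S of p-power index is S_{i,j,r} = { y = p^j u, x ≡ r u (mod p^i) }
      for a unique code (i, j, r) with i <= 2j, r < p^i, and its cotype is
      (p^{i+j-m}, p^m, 1) with m = min(i, j, v_p(r)); the cotype is pinned down by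
      intrinsic characterisations of alpha_1, alpha_2 and alpha_3.
  (2) Splitting {0..p^n-1}^3 by valuations, the level-n Riemann sum of the
      integrand is (1 - 1/p)^2 times the sum of the zeta terms of the codes with i, j < n.
  (3) For Re s1, Re s2 > 3 the term of code (i, j, r) is at most p^{-3(i+j)}, so
      every tail is at most 4/2^N: the partial sums converge to some L, the Riemann
      sums to (1 - 1/p)^2 L, and the zeta terms are summable with sum L. *)

Section PrimePowers.
Local Open Scope Z_scope.

Definition ppow (p : Z) (n : nat) : Z := p ^ Z.of_nat n.

Lemma ppow_0 p : ppow p 0 = 1.
Proof. reflexivity. Qed.

Lemma ppow_S p n : ppow p (S n) = p * ppow p n.
Proof. unfold ppow. rewrite Nat2Z.inj_succ, Z.pow_succ_r by lia. ring. Qed.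

Lemma ppow_add p a b : ppow p (a + b) = ppow p a * ppow p b.
Proof. unfold ppow. rewrite Nat2Z.inj_add, Z.pow_add_r by lia. ring. Qed.

Lemma ppow_pos p n : 1 < p -> 0 < ppow p n.
Proof. intros. unfold ppow. apply Z.pow_pos_nonneg; lia. Qed.

Lemma ppow_lt p a b : 1 < p -> (a < b)%nat -> ppow p a < ppow p b.
Proof.
  intros Hp Hab. replace b with (a + S (b - a - 1))%nat by lia.
  rewrite ppow_add, ppow_S. pose proof (ppow_pos p a Hp). pose proof (ppow_pos p (b - a - 1) Hp).
  assert (2 <= p * ppow p (b - a - 1)) by nia. nia.
Qed.

Lemma ppow_divide_le p a b : 1 < p -> (ppow p a | ppow p b) -> (a <= b)%nat.
Proof.
  intros Hp Hd. destruct (le_lt_dec a b) as [h|h]; auto.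
  pose proof (ppow_lt p b a Hp h). pose proof (ppow_pos p b Hp).
  apply Z.divide_pos_le in Hd; lia.
Qed.

Lemma ppow_divide p a b : (a <= b)%nat -> (ppow p a | ppow p b).
Proof.
  intros h. replace b with (a + (b - a))%nat by lia. rewrite ppow_add.
  exists (ppow p (b - a)). ring.
Qed.

Lemma prime_gt1 p : prime p -> 1 < p.
Proof. intros H; destruct H; lia. Qed.

Lemma ppow_divisor p d k : prime p -> 0 < d -> (d | ppow p k) -> exists e, d = ppow p e.
Proof.
  intros Hp Hd Hdk. unfold ppow in Hdk.
  destruct (Zpow_facts.Zdivide_power_2 d p (Z.of_nat k)) as [m Hm]; try lia; auto.
  destruct (Z_lt_le_dec m 0) as [hm|hm].
  - rewrite Z.pow_neg_r in Hm by lia. lia.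
  - exists (Z.to_nat m). unfold ppow. rewrite Z2Nat.id; auto.
Qed.

Lemma ppow_square_factor p : prime p ->
  forall e n u, (ppow p e * ppow p e | n * (n - ppow p e * u)) -> (ppow p e | n).
Proof.
  intros Hp. pose proof (prime_gt1 p Hp) as Hp1.
  induction e; intros n u H.
  - rewrite ppow_0. apply Z.divide_1_l.
  - rewrite ppow_S in *.
    assert (Hpn : (p | n)).
    { assert (Hp2 : (p | n * (n - p * ppow p e * u))).
      { eapply Z.divide_trans; [|exact H]. exists (ppow p e * ppow p e * p). ring. }
      destruct (prime_mult p Hp _ _ Hp2) as [h|h]; auto.
      replace n with ((n - p * ppow p e * u) + p * (ppow p e * u)) by ring.
      apply Z.divide_add_r; auto. exists (ppow p e * u). ring. }
    destruct Hpn as [n1 Hn1]. subst n.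
    assert (H2 : (ppow p e * ppow p e | n1 * (n1 - ppow p e * u))).
    { destruct H as [q Hq]. exists q.
      apply (Z.mul_reg_l _ _ (p * p)); [nia|].
      replace (p * p * (n1 * (n1 - ppow p e * u))) with (n1 * p * (n1 * p - p * ppow p e * u)) by ring.
      rewrite Hq. ring. }
    destruct (IHe n1 u H2) as [q Hq]. exists q. rewrite Hq. ring.
Qed.

End PrimePowers.

Section Valuation.
Local Open Scope Z_scope.
Variable p : Z.
Hypothesis Hp : 1 < p.

Lemma valuation_decomp x : x <> 0 -> exists v u, x = ppow p v * u /\ ~ (p | u).
Proof.
  remember (Z.to_nat (Z.abs x)) as f eqn:Hf.
  revert x Hf. induction f as [f IH] using lt_wf_ind. intros x Hf Hx.
  destruct (Zdivide_dec p x) as [[q Hq]|Hn].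
  - assert (q <> 0) by (intro; subst; lia).
    assert (Z.abs q < Z.abs x).
    { subst x. rewrite Z.abs_mul. assert (0 < Z.abs q) by lia. nia. }
    destruct (IH (Z.to_nat (Z.abs q)) ltac:(lia) q eq_refl H) as [v [u [E N]]].
    exists (S v), u. rewrite ppow_S. split; auto. rewrite Hq, E. ring.
  - exists 0%nat, x. rewrite ppow_0. split; auto. ring.
Qed.

Lemma vp_fuel_spec f x v u : x <> 0 -> (Z.to_nat (Z.abs x) <= f)%nat ->
  x = ppow p v * u -> ~ (p | u) -> vp_fuel f p x = v.
Proof.
  revert x v. induction f; intros x v Hx Hf E N; [lia|]. simpl. destruct v as [|v].
  - rewrite ppow_0, Z.mul_1_l in E. replace (x mod p =? 0) with false; [reflexivity|].
    symmetry. apply Z.eqb_neq. intro h. apply N. subst. apply Z.mod_divide; lia.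
  - rewrite ppow_S in E.
    assert (Hm : x mod p = 0) by (apply Z.mod_divide; [lia|]; exists (ppow p v * u); lia).
    assert (Hd : x / p = ppow p v * u) by (rewrite E, <- Z.mul_assoc, Z.mul_comm; apply Z.div_mul; lia).
    rewrite Hm. replace (x =? 0) with false by (symmetry; apply Z.eqb_neq; auto). simpl.
    f_equal. apply (IHf (x / p) v); auto; rewrite Hd.
    + intro h. apply Hx. rewrite E, <- Z.mul_assoc, h. ring.
    + assert (0 < Z.abs (ppow p v * u)) by (apply Z.abs_pos; intro h; rewrite <- Z.mul_assoc, h in E; lia).
      assert (Z.abs (ppow p v * u) < Z.abs x).
      { rewrite E, <- Z.mul_assoc, (Z.abs_mul p), (Z.abs_eq p) by lia. nia. }
      lia.
Qed.

Lemma vp_spec x v u : x = ppow p v * u -> ~ (p | u) -> vp p x = v.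
Proof.
  intros E N. unfold vp. apply (vp_fuel_spec _ x v u); auto.
  intro h. subst. apply N. apply Z.mul_eq_0 in h. destruct h as [h|h].
  - pose proof (ppow_pos p v Hp). lia.
  - subst. apply Z.divide_0_r.
Qed.

End Valuation.

(** The valuation as an element of nat ∪ {∞} ([None] = ∞, for 0), and the
    corresponding absolute value p^{-v}. *)
Definition val (p x : Z) : option nat := if Z.eqb x 0 then None else Some (vp p x).

Definition absv (p : Z) (o : option nat) : R :=
  match o with None => 0%R | Some a => (/ (IZR p) ^ a)%R end.

Lemma pabs_absv p x : pabs p x = absv p (val p x).
Proof. unfold pabs, val. destruct (x =? 0)%Z; reflexivity. Qed.

Section ValuationSteps.
Local Open Scope Z_scope.
Variable p : Z.
Hypothesis Hp : 1 < p.

Lemma val_unit q d : 0 <= q -> 0 < d < p -> val p (q * p + d) = Some 0%nat.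
Proof.
  intros Hq Hd. unfold val. replace (q * p + d =? 0) with false by (symmetry; apply Z.eqb_neq; nia).
  f_equal. apply (vp_spec p Hp _ 0 (q * p + d)); [rewrite ppow_0; ring|].
  intro h. assert (h2 : (p | d)).
  { replace d with ((q * p + d) - q * p) by ring. apply Z.divide_sub_r; auto. exists q; ring. }
  apply Z.divide_pos_le in h2; lia.
Qed.

Lemma val_mulp q : val p (q * p) = option_map S (val p q).
Proof.
  unfold val. destruct (Z.eqb_spec q 0) as [->|n]; [reflexivity|].
  replace (q * p =? 0) with false by (symmetry; apply Z.eqb_neq; nia).
  simpl. f_equal. destruct (valuation_decomp p Hp q n) as [v [u [E N]]].
  rewrite (vp_spec p Hp q v u E N). apply (vp_spec p Hp _ (S v) u); auto.
  rewrite ppow_S, E. ring.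
Qed.

End ValuationSteps.

Section ComplexSums.

Lemma csum_cons {T} (f : T -> C) x l : csum_list f (x :: l) = (f x + csum_list f l)%C.
Proof. reflexivity. Qed.

Lemma csum_app {T} (f : T -> C) l1 l2 :
  csum_list f (l1 ++ l2) = (csum_list f l1 + csum_list f l2)%C.
Proof. induction l1 as [|a l1 IH]; simpl; [ring|]. rewrite IH. ring. Qed.

Lemma csum_map {T U} (f : U -> C) (g : T -> U) l :
  csum_list f (map g l) = csum_list (fun x => f (g x)) l.
Proof. induction l as [|a l IH]; [reflexivity|]. simpl map. rewrite !csum_cons, IH. reflexivity. Qed.

Lemma csum_ext {T} (f g : T -> C) l : (forall x, In x l -> f x = g x) -> csum_list f l = csum_list g l.
Proof.
  induction l as [|a l IH]; intros H; [reflexivity|].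
  rewrite !csum_cons, IH, H; simpl; auto.
  intros; apply H; simpl; auto.
Qed.

Lemma csum_scal {T} (c : C) (f : T -> C) l : (c * csum_list f l)%C = csum_list (fun x => c * f x)%C l.
Proof. induction l as [|a l IH]; [unfold csum_list; simpl; ring|]. rewrite !csum_cons, <- IH. ring. Qed.

Lemma csum_plus {T} (f g : T -> C) l :
  csum_list (fun x => f x + g x)%C l = (csum_list f l + csum_list g l)%C.
Proof. induction l as [|a l IH]; [unfold csum_list; simpl; ring|]. rewrite !csum_cons, IH. ring. Qed.

Lemma csum_zero {T} (f : T -> C) l : (forall x, In x l -> f x = RtoC 0) -> csum_list f l = 0%C.
Proof.
  intros H. rewrite (csum_ext f (fun _ => 0%C)); auto. clear H.
  induction l as [|a l IH]; [reflexivity|]. rewrite csum_cons, IH. ring.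
Qed.

Lemma csum_perm {T} (f : T -> C) l1 l2 : Permutation l1 l2 -> csum_list f l1 = csum_list f l2.
Proof.
  induction 1 as [| x l l' _ IH | x y l | l l' l'' _ IH1 _ IH2].
  - reflexivity.
  - rewrite !csum_cons, IH. reflexivity.
  - rewrite !csum_cons. ring.
  - congruence.
Qed.

Lemma csum_flat_map {T U} (f : U -> C) (g : T -> list U) l :
  csum_list f (flat_map g l) = csum_list (fun x => csum_list f (g x)) l.
Proof. induction l as [|a l IH]; auto. simpl flat_map. rewrite csum_app, csum_cons, IH. reflexivity. Qed.

End ComplexSums.

Section NatSums.

Lemma csum_nat_ext n f g : (forall k, (k < n)%nat -> f k = g k) -> csum_nat n f = csum_nat n g.
Proof. intros H. apply csum_ext. intros x Hx. apply in_seq in Hx. apply H. lia. Qed.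

Lemma csum_nat_S n f : csum_nat (S n) f = (f 0%nat + csum_nat n (fun k => f (S k)))%C.
Proof. unfold csum_nat. simpl seq. rewrite csum_cons, <- seq_shift, csum_map. reflexivity. Qed.

Lemma seq_as_shift s b : seq s b = map (fun k => (s + k)%nat) (seq 0 b).
Proof.
  revert s; induction b as [|b IH]; intros s; simpl; auto. f_equal; [lia|].
  rewrite IH, <- seq_shift, map_map. apply map_ext. intros; lia.
Qed.

Lemma csum_nat_add a b f :
  csum_nat (a + b) f = (csum_nat a f + csum_nat b (fun k => f (a + k)%nat))%C.
Proof.
  unfold csum_nat. rewrite seq_app, csum_app. f_equal.
  rewrite Nat.add_0_l, seq_as_shift. apply csum_map.
Qed.

Lemma csum_nat_Sr n f : csum_nat (S n) f = (csum_nat n f + f n)%C.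
Proof.
  replace (S n) with (n + 1)%nat by lia. rewrite csum_nat_add. unfold csum_nat at 2. simpl.
  rewrite Nat.add_0_r. ring.
Qed.

Lemma csum_nat_plus n f g : csum_nat n (fun k => f k + g k)%C = (csum_nat n f + csum_nat n g)%C.
Proof. apply csum_plus. Qed.

Lemma csum_nat_scal n c f : (c * csum_nat n f)%C = csum_nat n (fun k => c * f k)%C.
Proof. apply csum_scal. Qed.

Lemma csum_nat_zero n (f : nat -> C) : (forall k, (k < n)%nat -> f k = 0%C) -> csum_nat n f = 0%C.
Proof. intros H. apply csum_zero. intros x Hx. apply in_seq in Hx. apply H; lia. Qed.

Lemma csum_nat_const n c : csum_nat n (fun _ => c) = (RtoC (INR n) * c)%C.
Proof.
  induction n as [|n IH]; [unfold csum_nat, csum_list; simpl; ring|].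
  rewrite csum_nat_Sr, IH, S_INR, RtoC_plus. ring.
Qed.

Lemma csum_nat_mul a b f :
  csum_nat (a * b) f = csum_nat a (fun q => csum_nat b (fun d => f (q * b + d)%nat)).
Proof.
  induction a as [|a IH]; [reflexivity|].
  replace (S a * b)%nat with (a * b + b)%nat by lia. rewrite csum_nat_add, csum_nat_Sr, IH. reflexivity.
Qed.

Lemma csum_nat_swap n m (f : nat -> nat -> C) :
  csum_nat n (fun i => csum_nat m (fun j => f i j)) = csum_nat m (fun j => csum_nat n (fun i => f i j)).
Proof.
  induction n as [|n IH].
  - symmetry. apply csum_nat_zero. reflexivity.
  - rewrite csum_nat_Sr, IH, <- csum_nat_plus. apply csum_nat_ext. intros. rewrite csum_nat_Sr. reflexivity.
Qed.

End NatSums.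

Section RealSums.
Local Open Scope R_scope.

Definition rsum_list {T : Type} (f : T -> R) (l : list T) : R :=
  fold_right (fun t acc => f t + acc) 0 l.
Definition rsum_nat (n : nat) (f : nat -> R) : R := rsum_list f (seq 0 n).

Lemma rsum_cons {T} (f : T -> R) x l : rsum_list f (x :: l) = f x + rsum_list f l.
Proof. reflexivity. Qed.

Lemma rsum_app {T} (f : T -> R) l1 l2 : rsum_list f (l1 ++ l2) = rsum_list f l1 + rsum_list f l2.
Proof. induction l1 as [|a l1 IH]; simpl; [ring|]. rewrite IH. ring. Qed.

Lemma rsum_map {T U} (f : U -> R) (g : T -> U) l : rsum_list f (map g l) = rsum_list (fun x => f (g x)) l.
Proof. induction l as [|a l IH]; [reflexivity|]. simpl map. rewrite !rsum_cons, IH. reflexivity. Qed.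

Lemma rsum_ext {T} (f g : T -> R) l : (forall x, In x l -> f x = g x) -> rsum_list f l = rsum_list g l.
Proof.
  induction l as [|a l IH]; intros H; [reflexivity|].
  rewrite !rsum_cons, IH, H; simpl; auto. intros; apply H; simpl; auto.
Qed.

Lemma rsum_le {T} (f g : T -> R) l : (forall x, In x l -> f x <= g x) -> rsum_list f l <= rsum_list g l.
Proof.
  induction l as [|a l IH]; intros H; simpl; [lra|].
  apply Rplus_le_compat; [apply H; simpl; auto|apply IH; intros; apply H; simpl; auto].
Qed.

Lemma rsum_nonneg {T} (f : T -> R) l : (forall x, In x l -> 0 <= f x) -> 0 <= rsum_list f l.
Proof. intros H. induction l as [|a l IH]; simpl; [lra|]. pose proof (H a (or_introl eq_refl)).
  assert (0 <= rsum_list f l) by (apply IH; intros; apply H; simpl; auto). lra. Qed.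

Lemma rsum_flat_map {T U} (f : U -> R) (g : T -> list U) l :
  rsum_list f (flat_map g l) = rsum_list (fun x => rsum_list f (g x)) l.
Proof. induction l as [|a l IH]; auto. simpl flat_map. rewrite rsum_app, rsum_cons, IH. reflexivity. Qed.

Lemma rsum_scal {T} c (f : T -> R) l : c * rsum_list f l = rsum_list (fun x => c * f x) l.
Proof. induction l as [|a l IH]; simpl; [ring|]. rewrite <- IH. ring. Qed.

Lemma rsum_nat_S n f : rsum_nat (S n) f = f 0%nat + rsum_nat n (fun k => f (S k)).
Proof. unfold rsum_nat. simpl seq. rewrite rsum_cons, <- seq_shift, rsum_map. reflexivity. Qed.

Lemma rsum_nat_ext n f g : (forall k, (k < n)%nat -> f k = g k) -> rsum_nat n f = rsum_nat n g.
Proof. intros H. apply rsum_ext. intros x Hx. apply in_seq in Hx. apply H. lia. Qed.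

Lemma rsum_nat_le n f g : (forall k, (k < n)%nat -> f k <= g k) -> rsum_nat n f <= rsum_nat n g.
Proof. intros H. apply rsum_le. intros x Hx. apply in_seq in Hx. apply H. lia. Qed.

Lemma rsum_nat_const n c : rsum_nat n (fun _ => c) = INR n * c.
Proof. induction n as [|n IH]; [unfold rsum_nat; simpl; ring|]. rewrite rsum_nat_S, IH, S_INR. ring. Qed.

Lemma RtoC_rsum n f : RtoC (rsum_nat n f) = csum_nat n (fun k => RtoC (f k)).
Proof.
  unfold rsum_nat, csum_nat. induction (seq 0 n) as [|a l IH]; [reflexivity|].
  rewrite rsum_cons, csum_cons, RtoC_plus, IH. reflexivity.
Qed.

Lemma Cmod_csum {T} (f : T -> C) l : Cmod (csum_list f l) <= rsum_list (fun x => Cmod (f x)) l.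
Proof.
  induction l as [|a l IH]; [unfold csum_list; simpl; rewrite Cmod_0; lra|].
  rewrite csum_cons, rsum_cons. eapply Rle_trans; [apply Cmod_triangle|lra].
Qed.

Lemma geom_sum_le2 q M : 0 <= q <= / 2 -> rsum_nat M (fun i => q ^ i) <= 2.
Proof.
  intros Hq. induction M as [|M IH]; [unfold rsum_nat; simpl; lra|].
  rewrite rsum_nat_S, pow_O.
  replace (rsum_nat M (fun k => q ^ S k)) with (q * rsum_nat M (fun i => q ^ i))
    by (unfold rsum_nat; rewrite rsum_scal; reflexivity).
  assert (0 <= rsum_nat M (fun i => q ^ i)) by (apply rsum_nonneg; intros; apply pow_le; lra).
  nra.
Qed.

End RealSums.

Section RealPowers.
Local Open Scope R_scope.
Variable p : Z.
Hypothesis Hp : (1 < p)%Z.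

Lemma IZRp_gt1 : 1 < IZR p.
Proof. apply IZR_lt. lia. Qed.

Lemma IZRp_pos : 0 < IZR p.
Proof. pose proof IZRp_gt1. lra. Qed.

Lemma powp_pos n : 0 < IZR p ^ n.
Proof. apply pow_lt, IZRp_pos. Qed.

Lemma invpow_pos n : 0 < / IZR p ^ n.
Proof. apply Rinv_0_lt_compat, powp_pos. Qed.

Lemma invpow_le a b : (b <= a)%nat -> / IZR p ^ a <= / IZR p ^ b.
Proof.
  intros h. apply Rinv_le_contravar; [apply powp_pos|]. apply Rle_pow; auto. pose proof IZRp_gt1; lra.
Qed.

Lemma invpow_le_inv a b : / IZR p ^ a <= / IZR p ^ b -> (b <= a)%nat.
Proof.
  intros h. destruct (le_lt_dec b a); auto.
  assert (/ IZR p ^ b < / IZR p ^ a); [|lra].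
  apply Rinv_lt_contravar; [apply Rmult_lt_0_compat; apply powp_pos|].
  apply Rlt_pow; auto. apply IZRp_gt1.
Qed.

Lemma IZR_ppow k : IZR (ppow p k) = IZR p ^ k.
Proof. unfold ppow. rewrite pow_IZR. reflexivity. Qed.

Lemma ln_invpow a : ln (/ IZR p ^ a) = - (INR a * ln (IZR p)).
Proof. rewrite ln_Rinv by apply powp_pos. rewrite ln_pow by apply IZRp_pos. reflexivity. Qed.

Lemma ln_ppow k : ln (IZR (ppow p k)) = INR k * ln (IZR p).
Proof. rewrite IZR_ppow, ln_pow by apply IZRp_pos. reflexivity. Qed.

Lemma Rmax_invpow x y : Rmax (/ IZR p ^ x) (/ IZR p ^ y) = / IZR p ^ (Nat.min x y).
Proof.
  destruct (le_lt_dec x y).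
  - rewrite Rmax_left by (apply invpow_le; auto). rewrite Nat.min_l by lia. auto.
  - rewrite Rmax_right by (apply invpow_le; lia). rewrite Nat.min_r by lia. auto.
Qed.

End RealPowers.

(** ** Counting residues by valuation *)

Section CountByValuation.
Local Open Scope R_scope.
Variable p : Z.
Hypothesis Hp : (1 < p)%Z.

(** The number (p - 1) p^{n-a-1} of residues mod p^n of valuation a < n. *)
Definition val_weight (n a : nat) : R := (IZR p - 1) * IZR p ^ n / IZR p ^ (S a).

(** Summing a function of the valuation over {0..p^n-1}: the residue 0
    (valuation "infinity" at level n) plus the weighted valuations a < n. *)
Definition vsum (n : nat) (F : option nat -> C) : C :=
  (F None + csum_nat n (fun a => RtoC (val_weight n a) * F (Some a)))%C.

(** One level of p-adic digits: i = q p + d with q < p^n and d < p; the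
    digit d = 0 shifts the valuation of q, the other p - 1 digits are units. *)
Lemma sum_residues_step n (F : option nat -> C) :
  csum_nat (Z.to_nat (ppow p (S n))) (fun i => F (val p (Z.of_nat i))) =
  (csum_nat (Z.to_nat (ppow p n)) (fun q => F (option_map S (val p (Z.of_nat q))))
   + RtoC (INR (Z.to_nat (ppow p n)) * (IZR p - 1)) * F (Some 0%nat))%C.
Proof.
  assert (Hpn := ppow_pos p n Hp).
  rewrite ppow_S, Z2Nat.inj_mul by lia. rewrite Nat.mul_comm, csum_nat_mul.
  replace (Z.to_nat p) with (S (Z.to_nat (p - 1))) by lia.
  rewrite (csum_nat_ext _ _ (fun q => F (option_map S (val p (Z.of_nat q)))
                                      + RtoC (IZR p - 1) * F (Some 0%nat))%C).
  - rewrite csum_nat_plus, csum_nat_const, RtoC_mult. ring.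
  - intros q _. rewrite csum_nat_S. f_equal.
    + rewrite Nat.add_0_r, Nat2Z.inj_mul, <- (val_mulp p Hp). f_equal. f_equal. lia.
    + replace (IZR p - 1) with (INR (Z.to_nat (p - 1)))
        by (rewrite INR_IZR_INZ, Z2Nat.id, minus_IZR by lia; reflexivity).
      rewrite <- csum_nat_const. apply csum_nat_ext. intros d Hd. f_equal.
      replace (Z.of_nat (q * S (Z.to_nat (p - 1)) + S d)) with (Z.of_nat q * p + Z.of_nat (S d))%Z by lia.
      apply val_unit; lia.
Qed.

Lemma sum_residues_by_valuation n (F : option nat -> C) :
  csum_nat (Z.to_nat (ppow p n)) (fun i => F (val p (Z.of_nat i))) = vsum n F.
Proof.
  pose proof (IZRp_pos p Hp) as Hp0.
  revert F. induction n as [|n IH]; intros F.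
  - unfold vsum, csum_nat, csum_list, val. simpl. ring.
  - rewrite sum_residues_step, (IH (fun o => F (option_map S o))).
    unfold vsum. rewrite csum_nat_S. simpl option_map.
    replace (INR (Z.to_nat (ppow p n)) * (IZR p - 1)) with (val_weight (S n) 0).
    2:{ unfold val_weight. rewrite INR_IZR_INZ, Z2Nat.id, IZR_ppow by (auto; pose proof (ppow_pos p n Hp); lia).
        simpl. field. lra. }
    rewrite (csum_nat_ext n (fun a => RtoC (val_weight n a) * F (Some (S a)))%C
                            (fun a => RtoC (val_weight (S n) (S a)) * F (Some (S a)))%C).
    + ring.
    + intros a _. unfold val_weight. simpl. f_equal. f_equal.
      pose proof (powp_pos p Hp a). field. lra.
Qed.

End CountByValuation.

Section ComplexPowers.
Local Open Scope R_scope.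

Lemma cexp_add z w : cexp (z + w)%C = (cexp z * cexp w)%C.
Proof.
  unfold cexp. destruct z as [a b], w as [c d]. simpl.
  rewrite exp_plus, cos_plus, sin_plus. apply injective_projections; simpl; ring.
Qed.

Lemma cexp_R r : cexp (RtoC r) = RtoC (exp r).
Proof. unfold cexp. simpl. rewrite cos_0, sin_0. unfold RtoC. f_equal; ring. Qed.

Lemma Cmod_cexp z : Cmod (cexp z) = exp (Re z).
Proof.
  destruct z as [a b]. unfold cexp, Cmod. simpl.
  pose proof (sin2_cos2 b) as H. unfold Rsqr in H. pose proof (exp_pos a).
  apply sqrt_lem_1; nra.
Qed.

Lemma rpowC_pos r s : 0 < r -> rpowC r s = cexp (RtoC (ln r) * s)%C.
Proof. intros H. unfold rpowC. destruct (Rle_dec r 0); [lra|reflexivity]. Qed.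

Lemma rpowC_nonpos r s : r <= 0 -> rpowC r s = RtoC 0.
Proof. intros H. unfold rpowC. destruct (Rle_dec r 0); [reflexivity|lra]. Qed.

End ComplexPowers.

Section IntegrandOnValuations.
Local Open Scope R_scope.
Variable p : Z.
Hypothesis Hp : (1 < p)%Z.

(** For the code (i, j, r) the second cotype exponent m = min(i, j, v(r)),
    with [ob] the valuation of r. *)
Definition cotype_exp (i j : nat) (ob : option nat) : nat :=
  match ob with None => Nat.min i j | Some b => Nat.min (Nat.min i j) b end.

Lemma cotype_exp_le i j ob : (cotype_exp i j ob <= i)%nat /\ (cotype_exp i j ob <= j)%nat.
Proof. unfold cotype_exp; destruct ob; lia. Qed.

(** alpha_1^{-s1} alpha_2^{-s2} for the cotype (p^{i+j-m}, p^m, 1). *)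
Definition code_term (s1 s2 : C) (i j : nat) (ob : option nat) : C :=
  (rpowC (IZR (ppow p (i + j - cotype_exp i j ob))) (- s1)
   * rpowC (IZR (ppow p (cotype_exp i j ob))) (- s2))%C.

Lemma code_term_large_val s1 s2 a c b :
  (a <= b)%nat -> code_term s1 s2 a c (Some b) = code_term s1 s2 a c None.
Proof.
  intros h. unfold code_term, cotype_exp.
  replace (Nat.min (Nat.min a c) b) with (Nat.min a c) by lia. reflexivity.
Qed.

Definition integrand_val (s1 s2 : C) (oa ob oc : option nat) : C :=
  if Rle_dec (absv p oc ^ 2) (absv p oa) then
    Cmult (Cmult (rpowC (absv p oa) (Cminus s1 (RtoC 2)))
                 (rpowC (absv p oc) (Cminus s1 (RtoC 1))))
          (rpowC (Rmax (absv p oa) (Rmax (absv p ob) (absv p oc))) (Cminus s2 s1))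
  else RtoC 0.

Lemma integrand_by_val s1 s2 x y z :
  integrand p s1 s2 x y z = integrand_val s1 s2 (val p x) (val p y) (val p z).
Proof. unfold integrand, integrand_val. rewrite !pabs_absv. reflexivity. Qed.

Lemma integrand_val_z0 s1 s2 oa ob : integrand_val s1 s2 oa ob None = RtoC 0.
Proof.
  unfold integrand_val. simpl absv at 2. destruct Rle_dec; auto.
  rewrite (rpowC_nonpos 0) by lra. ring.
Qed.

Lemma integrand_val_x0 s1 s2 ob c : integrand_val s1 s2 None ob (Some c) = RtoC 0.
Proof.
  unfold integrand_val. destruct Rle_dec as [r|]; auto. simpl in r.
  pose proof (invpow_pos p Hp c). nra.
Qed.

Lemma integrand_val_outside s1 s2 a ob c :
  (2 * c < a)%nat -> integrand_val s1 s2 (Some a) ob (Some c) = RtoC 0.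
Proof.
  intros h. unfold integrand_val. destruct Rle_dec as [r|]; auto. simpl in r.
  rewrite Rmult_1_r, <- Rinv_mult, <- pow_add in r. apply (invpow_le_inv p Hp) in r. lia.
Qed.

Lemma Rmax_absv a ob c :
  Rmax (/ IZR p ^ a) (Rmax (absv p ob) (/ IZR p ^ c)) = / IZR p ^ (cotype_exp a c ob).
Proof.
  unfold cotype_exp. destruct ob as [b|]; simpl absv.
  - rewrite !(Rmax_invpow p Hp). f_equal. f_equal. lia.
  - rewrite (Rmax_right 0) by (left; apply invpow_pos; auto). apply (Rmax_invpow p Hp).
Qed.

(** Inside the region, the integrand is p^{2a+c} times the zeta term of a
    code with v(x) = a, v(z) = c and v(y) = b: this is the identity
    |x|^{s1-2} |z|^{s1-1} max^{s2-s1} = p^{2a+c} p^{-(a+c-m) s1} p^{-m s2}. *)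
Lemma integrand_val_inside s1 s2 a ob c : (a <= 2 * c)%nat ->
  integrand_val s1 s2 (Some a) ob (Some c) = (RtoC (IZR p ^ (2 * a + c)) * code_term s1 s2 a c ob)%C.
Proof.
  intros h. unfold integrand_val. destruct Rle_dec as [r|r].
  2:{ exfalso. apply r. simpl. rewrite Rmult_1_r, <- Rinv_mult, <- pow_add. apply (invpow_le p Hp). lia. }
  simpl absv. rewrite Rmax_absv. unfold code_term.
  pose proof (cotype_exp_le a c ob) as [m1 m2]. set (m := cotype_exp a c ob) in *.
  assert (Hpos : forall k, 0 < IZR (ppow p k)) by (intros; rewrite IZR_ppow; apply powp_pos; auto).
  rewrite !rpowC_pos by (auto; apply invpow_pos; auto).
  rewrite !(ln_invpow p Hp), !(ln_ppow p Hp).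
  rewrite <- (exp_ln (IZR p ^ (2 * a + c))) by (apply powp_pos; auto).
  rewrite <- cexp_R, <- !cexp_add. f_equal.
  rewrite ln_pow by (apply IZRp_pos; auto).
  rewrite minus_INR by lia. rewrite plus_INR, !mult_INR, plus_INR. replace (INR 2) with 2 by (simpl; lra).
  repeat first [rewrite RtoC_opp | rewrite RtoC_mult | rewrite RtoC_minus | rewrite RtoC_plus]. ring.
Qed.

End IntegrandOnValuations.

(** ** Riemann sums as partial zeta sums *)

Section RiemannSums.
Local Open Scope R_scope.
Variable p : Z.
Hypothesis Hp : (1 < p)%Z.

Lemma vsum_ext n F G : (forall o, F o = G o) -> vsum p n F = vsum p n G.
Proof. intros H. unfold vsum. rewrite H. f_equal. apply csum_nat_ext. intros. rewrite H. reflexivity. Qed.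

Lemma vsum_zero n F : (forall o, F o = RtoC 0) -> vsum p n F = RtoC 0.
Proof. intros H. unfold vsum. rewrite H, csum_nat_zero; [ring|]. intros. rewrite H. ring. Qed.

Lemma vsum_scal n k F : vsum p n (fun o => k * F o)%C = (k * vsum p n F)%C.
Proof.
  unfold vsum. rewrite Cmult_plus_distr_l, csum_nat_scal. f_equal. apply csum_nat_ext. intros. ring.
Qed.

Lemma vsum_swap n m (F : nat -> option nat -> C) :
  vsum p n (fun o => csum_nat m (fun c => F c o)) = csum_nat m (fun c => vsum p n (F c)).
Proof.
  unfold vsum. rewrite csum_nat_plus. f_equal.
  rewrite (csum_nat_ext n _ (fun a => csum_nat m (fun c => RtoC (val_weight p n a) * F c (Some a))%C)).
  - apply csum_nat_swap.
  - intros. apply csum_nat_scal.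
Qed.

Lemma sum_triples_by_valuation n (Phi : option nat -> option nat -> option nat -> C) :
  let N := Z.to_nat (ppow p n) in
  csum_nat N (fun i => csum_nat N (fun j => csum_nat N (fun k =>
     Phi (val p (Z.of_nat i)) (val p (Z.of_nat j)) (val p (Z.of_nat k))))) =
  vsum p n (fun oa => vsum p n (fun ob => vsum p n (fun oc => Phi oa ob oc))).
Proof.
  simpl. rewrite <- (sum_residues_by_valuation p Hp). apply csum_nat_ext. intros i _.
  rewrite <- (sum_residues_by_valuation p Hp). apply csum_nat_ext. intros j _.
  apply (sum_residues_by_valuation p Hp).
Qed.

Lemma val_weight_geom d a : rsum_nat d (fun k => val_weight p (a + d) (a + k)) = IZR p ^ d - 1.
Proof.
  revert a. induction d as [|d IH]; intros a; [unfold rsum_nat; simpl; ring|].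
  rewrite rsum_nat_S, (rsum_nat_ext d _ (fun k => val_weight p (S a + d) (S a + k)))
    by (intros; f_equal; lia).
  rewrite IH. unfold val_weight. replace (a + S d)%nat with (S a + d)%nat by lia.
  rewrite Nat.add_0_r, !pow_add. simpl.
  pose proof (powp_pos p Hp a). pose proof (IZRp_pos p Hp). field. lra.
Qed.

(** If F(b) only depends on b up to b >= a, the level-n valuation sum is
    p^{n-a} times the level-a one (a function on Z/p^a lifted to Z/p^n). *)
Lemma vsum_lift n a F : (a <= n)%nat -> (forall b, (a <= b)%nat -> F (Some b) = F None) ->
  vsum p n F = (RtoC (IZR p ^ n / IZR p ^ a) * vsum p a F)%C.
Proof.
  intros han HF. pose proof (powp_pos p Hp a). pose proof (IZRp_pos p Hp).
  assert (Hsplit : IZR p ^ n / IZR p ^ a = IZR p ^ (n - a)).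
  { replace n with (a + (n - a))%nat at 1 by lia. rewrite pow_add. field. lra. }
  unfold vsum. replace n with (a + (n - a))%nat at 1 by lia. rewrite csum_nat_add.
  rewrite (csum_nat_ext (n - a) _ (fun k => RtoC (val_weight p n (a + k)) * F None)%C)
    by (intros; rewrite HF by lia; reflexivity).
  replace (csum_nat (n - a) (fun k => RtoC (val_weight p n (a + k)) * F None)%C)
    with (RtoC (IZR p ^ (n - a) - 1) * F None)%C.
  2:{ rewrite <- (val_weight_geom (n - a) a), RtoC_rsum, Cmult_comm, csum_nat_scal.
      replace (a + (n - a))%nat with n by lia. apply csum_nat_ext. intros; ring. }
  rewrite Cmult_plus_distr_l, csum_nat_scal.
  rewrite (csum_nat_ext a (fun k => RtoC (val_weight p n k) * F (Some k))%C
             (fun k => RtoC (IZR p ^ n / IZR p ^ a) * (RtoC (val_weight p a k) * F (Some k)))%C).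
  - rewrite Hsplit, RtoC_minus. ring.
  - intros k _. rewrite Cmult_assoc, <- RtoC_mult. f_equal. f_equal. unfold val_weight.
    pose proof (powp_pos p Hp (S k)). field. lra.
Qed.

Definition zeta_partial (s1 s2 : C) (n : nat) : C :=
  csum_nat n (fun i => csum_nat n (fun j =>
    if (i <=? 2 * j)%nat
    then csum_nat (Z.to_nat (ppow p i)) (fun r => code_term p s1 s2 i j (val p (Z.of_nat r)))
    else RtoC 0)).

(** Contribution of the cell v(x) = a, v(z) = c (a, c < n) to the level-n
    Riemann sum: integrating out y leaves a sum over r mod p^a. *)
Lemma riemann_cell s1 s2 n a c : (a < n)%nat -> (c < n)%nat ->
  (RtoC (/ IZR p ^ (3 * n)) * (RtoC (val_weight p n a)
     * (RtoC (val_weight p n c) * vsum p n (fun ob => integrand_val p s1 s2 (Some a) ob (Some c)))))%C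
  = (RtoC ((1 - / IZR p) ^ 2) *
     (if (a <=? 2 * c)%nat
      then csum_nat (Z.to_nat (ppow p a)) (fun r => code_term p s1 s2 a c (val p (Z.of_nat r)))
      else RtoC 0))%C.
Proof.
  intros Ha Hc. destruct (Nat.leb_spec a (2 * c)).
  - rewrite (vsum_ext n _ (fun ob => RtoC (IZR p ^ (2 * a + c)) * code_term p s1 s2 a c ob)%C)
      by (intros; apply (integrand_val_inside p Hp); auto).
    rewrite vsum_scal, (vsum_lift n a) by (try lia; intros; apply code_term_large_val; auto).
    rewrite (sum_residues_by_valuation p Hp).
    rewrite !Cmult_assoc, <- !RtoC_mult. f_equal. f_equal.
    unfold val_weight. pose proof (IZRp_pos p Hp).
    replace (3 * n)%nat with (n + n + n)%nat by lia. replace (2 * a + c)%nat with (a + a + c)%nat by lia.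
    rewrite !pow_add. simpl.
    pose proof (powp_pos p Hp a). pose proof (powp_pos p Hp c). pose proof (powp_pos p Hp n).
    field. repeat split; lra.
  - rewrite vsum_zero by (intros; apply (integrand_val_outside p Hp); lia). ring.
Qed.

Lemma riemann_sum_partial_zeta s1 s2 n :
  RiemannSum p s1 s2 n = (RtoC ((1 - / IZR p) ^ 2) * zeta_partial s1 s2 n)%C.
Proof.
  unfold RiemannSum. fold (ppow p n).
  rewrite (csum_nat_ext _ _ (fun i => csum_nat _ (fun j => csum_nat _ (fun k =>
     integrand_val p s1 s2 (val p (Z.of_nat i)) (val p (Z.of_nat j)) (val p (Z.of_nat k))))))
    by (intros; apply csum_nat_ext; intros; apply csum_nat_ext; intros; apply integrand_by_val).
  rewrite sum_triples_by_valuation. unfold vsum at 1.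
  rewrite vsum_zero, Cplus_0_l
    by (intros ob; apply vsum_zero; intros [c|]; [apply (integrand_val_x0 p Hp)|apply integrand_val_z0]).
  unfold zeta_partial. rewrite !csum_nat_scal. apply csum_nat_ext. intros a Ha.
  rewrite (vsum_ext n _ (fun ob => csum_nat n (fun c =>
             RtoC (val_weight p n c) * integrand_val p s1 s2 (Some a) ob (Some c))%C))
    by (intros ob; unfold vsum; rewrite integrand_val_z0; ring).
  rewrite vsum_swap, !csum_nat_scal. apply csum_nat_ext. intros c Hc.
  rewrite vsum_scal. apply riemann_cell; auto.
Qed.

End RiemannSums.

(** ** Intrinsic characterisation of the cotype

  If R/S ≅ Z/a1 ⊕ Z/a2 ⊕ Z/a3 (witnessed by a matrix as in [IsCotype]),
  then a1 is the exponent of R/S, a2 is the least n for which n(R/S) is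
  cyclic (for p-power index), and a3 = 1 as soon as 1 ∈ S.  These make the
  cotype of S a function of S alone. *)

Section CotypeInvariants.
Local Open Scope Z_scope.

Lemma cotype_alpha1 S a1 a2 a3 : IsCotype S a1 a2 a3 -> forall n,
  (forall x y z, S (n * x) (n * y) (n * z)) <-> (a1 | n).
Proof.
  intros [H3 [H32 [H21 [m11 [m12 [m13 [m21 [m22 [m23 [m31 [m32 [m33 [Hk Hs]]]]]]]]]]]]].
  cbv zeta in *. intros n. split.
  - intros H. destruct (Hs 1 0 0) as [a [b [c [D1 _]]]].
    destruct (proj1 (Hk (n * a) (n * b) (n * c)) (H a b c)) as [E1 _].
    replace n with (n * (m11 * a + m12 * b + m13 * c) - n * (m11 * a + m12 * b + m13 * c - 1)) by ring.
    apply Z.divide_sub_r; [|apply Z.divide_mul_r; auto].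
    replace (n * (m11 * a + m12 * b + m13 * c)) with (m11 * (n * a) + m12 * (n * b) + m13 * (n * c)) by ring.
    auto.
  - intros Hd x y z. apply Hk.
    assert (Hd2 : (a2 | n)) by (eapply Z.divide_trans; eauto).
    assert (Hd3 : (a3 | n)) by (eapply Z.divide_trans; eauto).
    repeat split; [replace (m11 * (n * x) + m12 * (n * y) + m13 * (n * z)) with (n * (m11 * x + m12 * y + m13 * z)) by ring
                  |replace (m21 * (n * x) + m22 * (n * y) + m23 * (n * z)) with (n * (m21 * x + m22 * y + m23 * z)) by ring
                  |replace (m31 * (n * x) + m32 * (n * y) + m33 * (n * z)) with (n * (m31 * x + m32 * y + m33 * z)) by ring];
      apply Z.divide_mul_l; auto.
Qed.

(** n(R/S) is cyclic: n R ⊆ S + Z w for some w ∈ R. *)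
Definition cyclic_multiple (S : subsetR) (n : Z) : Prop :=
  exists w1 w2 w3, forall x y z, exists k, S (n * x - k * w1) (n * y - k * w2) (n * z - k * w3).

(** The key arithmetic fact behind alpha_2: if diag(n, n) agrees modulo a
    prime power a with a rank-one matrix (k1, k2)^T (g1, g2), then a | n. *)
Lemma diag_rank_one_mod p e n k1 k2 g1 g2 : prime p ->
  let a := ppow p e in
  (a | n - k1 * g1) -> (a | k1 * g2) -> (a | k2 * g1) -> (a | n - k2 * g2) -> (a | n).
Proof.
  intros Hp a [s Hs] [u Hu] [w Hw] [t Ht].
  apply (ppow_square_factor p Hp e n (s + t)). fold a. exists (u * w - s * t).
  replace (n * (n - a * (s + t))) with ((n - s * a) * (n - t * a) - s * t * (a * a)) by ring.
  replace (n - s * a) with (k1 * g1) by lia. replace (n - t * a) with (k2 * g2) by lia.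
  replace (k1 * g1 * (k2 * g2)) with ((k1 * g2) * (k2 * g1)) by ring.
  rewrite Hu, Hw. ring.
Qed.

(** If n(R/S) is cyclic, write the images of t^2 and t as k1 g and k2 g; the
    second cotype coordinate then gives the hypotheses of [diag_rank_one_mod]. *)
Lemma cyclic_multiple_alpha2 p K S a1 a2 a3 n : prime p -> IsCotype S a1 a2 a3 -> 0 < a2 ->
  (a2 | ppow p K) -> cyclic_multiple S n -> (a2 | n).
Proof.
  intros Hp [H3 [H32 [H21 [m11 [m12 [m13 [m21 [m22 [m23 [m31 [m32 [m33 [Hk Hs]]]]]]]]]]]]] Ha2 Hdiv.
  cbv zeta in *. intros [w1 [w2 [w3 Hw]]].
  destruct (ppow_divisor p a2 K Hp Ha2 Hdiv) as [e He].
  (* preimages of the first two generators of R/S *)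
  destruct (Hs 1 0 0) as [a [b [c [D1 [D2 _]]]]].
  destruct (Hs 0 1 0) as [a' [b' [c' [D1' [D2' _]]]]].
  destruct (Hw a b c) as [k1 Hw1]. destruct (Hw a' b' c') as [k2 Hw2].
  apply Hk in Hw1. apply Hk in Hw2. destruct Hw1 as [F1 [F2 _]]. destruct Hw2 as [G1 [G2 _]].
  set (g1 := m11 * w1 + m12 * w2 + m13 * w3). set (g2 := m21 * w1 + m22 * w2 + m23 * w3).
  rewrite He. apply (diag_rank_one_mod p e n k1 k2 g1 g2 Hp); rewrite <- He.
  - apply (Z.divide_trans _ a1); auto.
    replace (n - k1 * g1) with ((m11 * (n * a - k1 * w1) + m12 * (n * b - k1 * w2) + m13 * (n * c - k1 * w3))
                                - n * (m11 * a + m12 * b + m13 * c - 1)) by (unfold g1; ring).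
    apply Z.divide_sub_r; auto. apply Z.divide_mul_r. auto.
  - replace (k1 * g2) with (n * (m21 * a + m22 * b + m23 * c - 0)
                            - (m21 * (n * a - k1 * w1) + m22 * (n * b - k1 * w2) + m23 * (n * c - k1 * w3)))
      by (unfold g2; ring).
    apply Z.divide_sub_r; auto. apply Z.divide_mul_r; auto.
  - apply (Z.divide_trans _ a1); auto.
    replace (k2 * g1) with (n * (m11 * a' + m12 * b' + m13 * c' - 0)
                            - (m11 * (n * a' - k2 * w1) + m12 * (n * b' - k2 * w2) + m13 * (n * c' - k2 * w3)))
      by (unfold g1; ring).
    apply Z.divide_sub_r; auto. apply Z.divide_mul_r; auto.
  - replace (n - k2 * g2) with ((m21 * (n * a' - k2 * w1) + m22 * (n * b' - k2 * w2) + m23 * (n * c' - k2 * w3))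
                                - n * (m21 * a' + m22 * b' + m23 * c' - 1)) by (unfold g2; ring).
    apply Z.divide_sub_r; auto. apply Z.divide_mul_r. auto.
Qed.

(** Conversely a2 | n makes n(R/S) cyclic, generated by a preimage of the
    first generator. *)
Lemma alpha2_cyclic_multiple S a1 a2 a3 n : IsCotype S a1 a2 a3 -> (a2 | n) -> cyclic_multiple S n.
Proof.
  intros [H3 [H32 [H21 [m11 [m12 [m13 [m21 [m22 [m23 [m31 [m32 [m33 [Hk Hs]]]]]]]]]]]]] Hd.
  cbv zeta in *. destruct (Hs 1 0 0) as [a [b [c [D1 [D2 D3]]]]].
  assert (Hd3 : (a3 | n)) by exact (Z.divide_trans _ _ _ H32 Hd).
  exists a, b, c. intros x y z. set (k := m11 * x + m12 * y + m13 * z).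
  exists (n * k). apply Hk. repeat split.
  - replace (m11 * (n * x - n * k * a) + m12 * (n * y - n * k * b) + m13 * (n * z - n * k * c))
      with (- (n * k) * (m11 * a + m12 * b + m13 * c - 1)) by (unfold k; ring).
    apply Z.divide_mul_r; auto.
  - replace (m21 * (n * x - n * k * a) + m22 * (n * y - n * k * b) + m23 * (n * z - n * k * c))
      with (n * (m21 * x + m22 * y + m23 * z) - n * k * (m21 * a + m22 * b + m23 * c - 0)) by ring.
    apply Z.divide_sub_r; apply Z.divide_mul_l; auto. apply Z.divide_mul_l; auto.
  - replace (m31 * (n * x - n * k * a) + m32 * (n * y - n * k * b) + m33 * (n * z - n * k * c))
      with (n * (m31 * x + m32 * y + m33 * z) - n * k * (m31 * a + m32 * b + m33 * c - 0)) by ring.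
    apply Z.divide_sub_r; apply Z.divide_mul_l; auto. apply Z.divide_mul_l; auto.
Qed.

Lemma cotype_alpha2 p K S a1 a2 a3 : prime p -> IsCotype S a1 a2 a3 -> 0 < a2 -> (a2 | ppow p K) ->
  forall n, cyclic_multiple S n <-> (a2 | n).
Proof.
  intros Hp Hc Ha2 Hdiv n. split.
  - apply (cyclic_multiple_alpha2 p K S a1 a2 a3 n); auto.
  - apply (alpha2_cyclic_multiple S a1 a2 a3 n Hc).
Qed.

Definition det3 (a b c d e f g h i : Z) : Z :=
  a * (e * i - f * h) - b * (d * i - f * g) + c * (d * h - e * g).

Lemma det3_mul m11 m12 m13 m21 m22 m23 m31 m32 m33 v11 v12 v13 v21 v22 v23 v31 v32 v33 :
  det3 (m11 * v11 + m12 * v21 + m13 * v31) (m11 * v12 + m12 * v22 + m13 * v32) (m11 * v13 + m12 * v23 + m13 * v33)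
       (m21 * v11 + m22 * v21 + m23 * v31) (m21 * v12 + m22 * v22 + m23 * v32) (m21 * v13 + m22 * v23 + m23 * v33)
       (m31 * v11 + m32 * v21 + m33 * v31) (m31 * v12 + m32 * v22 + m33 * v32) (m31 * v13 + m32 * v23 + m33 * v33)
  = det3 m11 m12 m13 m21 m22 m23 m31 m32 m33 * det3 v11 v12 v13 v21 v22 v23 v31 v32 v33.
Proof. unfold det3. ring. Qed.

Lemma det3_unit_mod a e11 e12 e13 e21 e22 e23 e31 e32 e33 :
  (a | det3 (1 + a * e11) (a * e12) (a * e13) (a * e21) (1 + a * e22) (a * e23)
            (a * e31) (a * e32) (1 + a * e33) - 1).
Proof.
  exists ((e11 + e22 + e33) + a * (e11 * e22 - e12 * e21 + e11 * e33 - e13 * e31 + e22 * e33 - e23 * e32)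
          + a * a * det3 e11 e12 e13 e21 e22 e23 e31 e32 e33).
  unfold det3. ring.
Qed.

(** alpha_3 = 1 when 1 ∈ S: the matrix M of the cotype has a right inverse
    modulo a3 (surjectivity), while its third column vanishes modulo a3
    (1 ∈ S), so 1 ≡ det M det V ≡ 0 (mod a3). *)
Lemma cotype_alpha3 S a1 a2 a3 : IsCotype S a1 a2 a3 -> S 0 0 1 -> (a3 | 1).
Proof.
  intros [H3 [H32 [H21 [m11 [m12 [m13 [m21 [m22 [m23 [m31 [m32 [m33 [Hk Hs]]]]]]]]]]]]] H001.
  cbv zeta in *.
  assert (H31 : (a3 | a1)) by exact (Z.divide_trans _ _ _ H32 H21).
  apply Hk in H001. rewrite !Z.mul_0_r, !Z.add_0_l, !Z.mul_1_r in H001. destruct H001 as [C1 [C2 C3]].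
  assert (Hm : (a3 | det3 m11 m12 m13 m21 m22 m23 m31 m32 m33)).
  { destruct (Z.divide_trans _ _ _ H31 C1) as [q1 ->]. destruct (Z.divide_trans _ _ _ H32 C2) as [q2 ->].
    destruct C3 as [q3 ->]. unfold det3.
    exists (m21 * m32 * q1 - m22 * m31 * q1 - m11 * m32 * q2 + m12 * m31 * q2 + m11 * m22 * q3 - m12 * m21 * q3).
    ring. }
  destruct (Hs 1 0 0) as [v11 [v21 [v31 [D11 [D21 D31]]]]].
  destruct (Hs 0 1 0) as [v12 [v22 [v32 [D12 [D22 D32]]]]].
  destruct (Hs 0 0 1) as [v13 [v23 [v33 [D13 [D23 D33]]]]].
  destruct (Z.divide_trans _ _ _ H31 D11) as [e11 F11]. destruct (Z.divide_trans _ _ _ H31 D12) as [e12 F12].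
  destruct (Z.divide_trans _ _ _ H31 D13) as [e13 F13]. destruct (Z.divide_trans _ _ _ H32 D21) as [e21 F21].
  destruct (Z.divide_trans _ _ _ H32 D22) as [e22 F22]. destruct (Z.divide_trans _ _ _ H32 D23) as [e23 F23].
  destruct D31 as [e31 F31]. destruct D32 as [e32 F32]. destruct D33 as [e33 F33].
  pose proof (det3_unit_mod a3 e11 e12 e13 e21 e22 e23 e31 e32 e33) as Hd.
  rewrite (Z.mul_comm a3 e11), (Z.mul_comm a3 e12), (Z.mul_comm a3 e13), (Z.mul_comm a3 e21),
    (Z.mul_comm a3 e22), (Z.mul_comm a3 e23), (Z.mul_comm a3 e31), (Z.mul_comm a3 e32),
    (Z.mul_comm a3 e33), <- F12, <- F13, <- F21, <- F23, <- F31, <- F32 in Hd.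
  replace (1 + e11 * a3) with (m11 * v11 + m12 * v21 + m13 * v31 - 0) in Hd by lia.
  replace (1 + e22 * a3) with (m21 * v12 + m22 * v22 + m23 * v32 - 0) in Hd by lia.
  replace (1 + e33 * a3) with (m31 * v13 + m32 * v23 + m33 * v33 - 0) in Hd by lia.
  rewrite !Z.sub_0_r, det3_mul in Hd.
  replace 1 with (det3 m11 m12 m13 m21 m22 m23 m31 m32 m33 * det3 v11 v12 v13 v21 v22 v23 v31 v32 v33
                  - (det3 m11 m12 m13 m21 m22 m23 m31 m32 m33 * det3 v11 v12 v13 v21 v22 v23 v31 v32 v33 - 1))
    by ring.
  apply Z.divide_sub_r; auto. apply Z.divide_mul_l; auto.
Qed.

End CotypeInvariants.

(** ** Classification of the subrings of p-power index *)

Section Subgroups.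
Local Open Scope Z_scope.

Lemma least_exists (P : nat -> Prop) : (exists n, P n) -> exists n, P n /\ forall m, (m < n)%nat -> ~ P m.
Proof.
  intros [n Hn]. revert Hn. induction n as [n IH] using lt_wf_ind. intros Hn.
  destruct (classic (exists m, (m < n)%nat /\ P m)) as [[m [Hm Pm]]|Hno].
  - apply (IH m Hm Pm).
  - exists n. split; auto. intros m Hm Pm. apply Hno. eauto.
Qed.

Lemma zsubgroup_scal (Q : Z -> Prop) : Q 0 -> (forall a b, Q a -> Q b -> Q (a + b)) ->
  (forall a, Q a -> Q (- a)) -> forall n a, Q a -> Q (n * a).
Proof.
  intros H0 Hadd Hneg.
  assert (Hnat : forall m a, Q a -> Q (Z.of_nat m * a)).
  { induction m as [|m IH]; intros a Ha; [exact H0|].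
    rewrite Nat2Z.inj_succ. replace (Z.succ (Z.of_nat m) * a) with (Z.of_nat m * a + a) by ring. auto. }
  intros n a Ha. destruct (Z_le_gt_dec 0 n).
  - replace n with (Z.of_nat (Z.to_nat n)) by lia. auto.
  - replace (n * a) with (- (Z.of_nat (Z.to_nat (- n)) * a)) by lia. auto.
Qed.

Lemma zsubgroup_ppow p K (Q : Z -> Prop) : prime p -> Q 0 -> (forall a b, Q a -> Q b -> Q (a + b)) ->
  (forall a, Q a -> Q (- a)) -> Q (ppow p K) -> exists i, forall x, Q x <-> (ppow p i | x).
Proof.
  intros Hp H0 Hadd Hneg HK. pose proof (prime_gt1 p Hp) as Hp1.
  pose proof (zsubgroup_scal Q H0 Hadd Hneg) as Hsc.
  destruct (least_exists (fun i => Q (ppow p i))) as [i [Hi Hmin]]; eauto.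
  exists i. intros x. split.
  - intros Hx. destruct (Z.gcd_bezout x (ppow p i) _ eq_refl) as [u [v Huv]].
    assert (Qg : Q (Z.gcd x (ppow p i))) by (rewrite <- Huv; apply Hadd; apply Hsc; auto).
    assert (gpos : 0 < Z.gcd x (ppow p i)).
    { pose proof (Z.gcd_nonneg x (ppow p i)). destruct (Z.eq_dec (Z.gcd x (ppow p i)) 0) as [h|h]; [|lia].
      apply Z.gcd_eq_0 in h. pose proof (ppow_pos p i Hp1). lia. }
    destruct (ppow_divisor p _ i Hp gpos (Z.gcd_divide_r x (ppow p i))) as [e He].
    assert (hei : (i <= e)%nat) by (destruct (le_lt_dec i e); auto; exfalso; apply (Hmin e); [lia|congruence]).
    apply (Z.divide_trans _ (ppow p e)); [apply ppow_divide; auto|]. rewrite <- He. apply Z.gcd_divide_l.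
  - intros [q ->]. apply Hsc. auto.
Qed.

End Subgroups.

Definition code_subring (p : Z) (i j r : nat) : subsetR :=
  fun x y z => exists t : Z, (y = ppow p j * t /\ (ppow p i | x - Z.of_nat r * t))%Z.

Section Classification.
Local Open Scope Z_scope.
Variables (p : Z) (S : subsetR) (a1 a2 a3 : Z) (K : nat).
Hypotheses (Hp : prime p) (Hsub : IsSubringSet S) (Hcot : IsCotype S a1 a2 a3)
           (HK : a1 * a2 * a3 = ppow p K).

Lemma subring_scal n x y z : S x y z -> S (n * x) (n * y) (n * z).
Proof.
  destruct Hsub as [S0 [Sadd [Sneg _]]]. intros H.
  rewrite <- (Z.mul_1_r n).
  apply (zsubgroup_scal (fun k => S (k * x) (k * y) (k * z))); cbv beta; auto.
  - intros a b Ha Hb. rewrite !Z.mul_add_distr_r. auto.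
  - intros a Ha. rewrite !Z.mul_opp_l. auto.
  - rewrite !Z.mul_1_l. exact H.
Qed.

Lemma subring_add x y z x' y' z' : S x y z -> S x' y' z' -> S (x + x') (y + y') (z + z').
Proof. destruct Hsub as [_ [Sadd _]]. apply Sadd. Qed.

(** The constant term is irrelevant since 1 ∈ S. *)
Lemma subring_const x y z : S x y z <-> S x y 0.
Proof.
  destruct Hsub as [_ [_ [_ [S1 _]]]].
  split; intros H.
  - pose proof (subring_add _ _ _ _ _ _ H (subring_scal (- z) _ _ _ S1)) as A.
    rewrite !Z.mul_0_r, !Z.add_0_r, Z.mul_1_r, Z.add_opp_diag_r in A. exact A.
  - pose proof (subring_add _ _ _ _ _ _ H (subring_scal z _ _ _ S1)) as A.
    rewrite !Z.mul_0_r, !Z.add_0_r, Z.mul_1_r, Z.add_0_l in A. exact A.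
Qed.

Lemma subring_contains_ppow x y z : S (ppow p K * x) (ppow p K * y) (ppow p K * z).
Proof. apply (cotype_alpha1 S a1 a2 a3 Hcot). rewrite <- HK. exists (a2 * a3). ring. Qed.

Lemma subring_x_axis : exists i, forall x, S x 0 0 <-> (ppow p i | x).
Proof.
  destruct Hsub as [S0 [Sadd [Sneg _]]].
  apply (zsubgroup_ppow p K (fun x => S x 0 0) Hp); auto.
  - intros a b Ha Hb. replace 0 with (0 + 0) by ring. auto.
  - intros a Ha. replace 0 with (- 0) by ring. auto.
  - pose proof (subring_contains_ppow 1 0 0). rewrite Z.mul_1_r, Z.mul_0_r in H. exact H.
Qed.

Lemma subring_y_axis : exists j, forall y, (exists x, S x y 0) <-> (ppow p j | y).
Proof.
  destruct Hsub as [S0 [Sadd [Sneg _]]].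
  apply (zsubgroup_ppow p K (fun y => exists x, S x y 0) Hp); eauto.
  - intros a b [x Ha] [x' Hb]. exists (x + x'). replace 0 with (0 + 0) by ring. auto.
  - intros a [x Ha]. exists (- x). replace 0 with (- 0) by ring. auto.
  - exists 0. pose proof (subring_contains_ppow 0 1 0). rewrite Z.mul_1_r, Z.mul_0_r in H. exact H.
Qed.

(** Every subring of p-power index is a [code_subring] with a valid code;
    i <= 2j comes from (r t^2 + p^j t)^2 = p^{2j} t^2 ∈ S. *)
Lemma subring_classification :
  exists i j r, (i <= 2 * j)%nat /\ (r < Z.to_nat (ppow p i))%nat /\
    forall x y z, S x y z <-> code_subring p i j r x y z.
Proof.
  pose proof (prime_gt1 p Hp) as Hp1.
  destruct subring_x_axis as [i Hi]. destruct subring_y_axis as [j Hj].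
  assert (Hpi := ppow_pos p i Hp1).
  destruct (proj2 (Hj (ppow p j)) (Z.divide_refl _)) as [x0 Hx0].
  set (r := x0 mod ppow p i).
  assert (Hr : 0 <= r < ppow p i) by (apply Z.mod_pos_bound; lia).
  (* the generator r t^2 + p^j t of S modulo Z t^2 *)
  assert (Sr : forall t, S (r * t) (ppow p j * t) 0).
  { intros t. rewrite Z.mul_comm, (Z.mul_comm _ t). replace 0 with (t * 0) by ring. apply subring_scal.
    replace r with (x0 + (- (x0 / ppow p i)) * ppow p i) by (unfold r; rewrite Z.mod_eq by lia; ring).
    replace (ppow p j) with (ppow p j + 0) by ring. replace 0 with (0 + 0) at 2 by ring.
    apply subring_add; auto. apply Hi. apply Z.divide_mul_r, Z.divide_refl. }
  exists i, j, (Z.to_nat r). unfold code_subring. rewrite Z2Nat.id by lia. repeat split.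
  - destruct Hsub as [_ [_ [_ [_ Smul]]]].
    assert (Hm := Smul (r, ppow p j, 0) (r, ppow p j, 0)). simpl in Hm.
    rewrite !Z.mul_0_r, !Z.add_0_r, !Z.add_0_l in Hm.
    specialize (Sr 1). rewrite !Z.mul_1_r in Sr.
    apply Hi in Hm; auto. rewrite <- ppow_add in Hm. apply ppow_divide_le in Hm; auto. lia.
  - apply Nat2Z.inj_lt. rewrite !Z2Nat.id; lia.
  - intros H. apply subring_const in H.
    destruct (proj1 (Hj y) (ex_intro _ x H)) as [t Ht]. exists t. split; [rewrite Ht; ring|].
    apply Hi. pose proof (subring_add _ _ _ _ _ _ H (Sr (- t))) as A.
    replace (x + r * - t) with (x - r * t) in A by ring.
    replace (y + ppow p j * - t) with 0 in A by (rewrite Ht; ring). exact A.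
  - intros [t [Ht Hd]]. apply subring_const. apply Hi in Hd.
    pose proof (subring_add _ _ _ _ _ _ Hd (Sr t)) as A.
    replace (x - r * t + r * t) with x in A by ring.
    replace (0 + ppow p j * t) with y in A by (rewrite Ht; ring). exact A.
Qed.

End Classification.

Section CodeSubrings.
Local Open Scope Z_scope.
Variable p : Z.

(** For i <= 2j the code set is a subring: the cross term y y' is a multiple of p^{2j}. *)
Lemma code_subring_is_subring i j r : (i <= 2 * j)%nat -> IsSubringSet (code_subring p i j r).
Proof.
  intros hij. unfold IsSubringSet, code_subring. repeat split.
  - exists 0. split; [ring|]. exists 0. ring.
  - intros a b c a' b' c' [t [Ht Hd]] [t' [Ht' Hd']]. exists (t + t'). split; [rewrite Ht, Ht'; ring|].
    replace (a + a' - Z.of_nat r * (t + t')) with ((a - Z.of_nat r * t) + (a' - Z.of_nat r * t')) by ring.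
    apply Z.divide_add_r; auto.
  - intros a b c [t [Ht Hd]]. exists (- t). split; [rewrite Ht; ring|].
    replace (- a - Z.of_nat r * - t) with (- (a - Z.of_nat r * t)) by ring. apply Z.divide_opp_r; auto.
  - exists 0. split; [ring|]. exists 0. ring.
  - intros [[x y] z] [[x' y'] z'] [t [Ht Hd]] [t' [Ht' Hd']]. simpl.
    exists (t * z' + z * t'). split; [rewrite Ht, Ht'; ring|].
    replace (x * z' + y * y' + z * x' - Z.of_nat r * (t * z' + z * t'))
      with (z' * (x - Z.of_nat r * t) + z * (x' - Z.of_nat r * t') + (ppow p j * ppow p j) * (t * t'))
      by (rewrite Ht, Ht'; ring).
    apply Z.divide_add_r; [apply Z.divide_add_r; apply Z.divide_mul_r; auto|].
    apply Z.divide_mul_l. rewrite <- ppow_add. apply ppow_divide. lia.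
Qed.

Hypothesis Hp : 1 < p.

(** Case p^j | r (with j <= i): R/S ≅ Z/p^i ⊕ Z/p^j via
    x t^2 + y t + z ↦ (x - (r/p^j) y, y). *)
Lemma code_cotype_divisible i j r r2 : (j <= i)%nat -> Z.of_nat r = ppow p j * r2 ->
  IsCotype (code_subring p i j r) (ppow p i) (ppow p j) 1.
Proof.
  intros hji Er. split; [lia|]. split; [apply Z.divide_1_l|]. split; [apply ppow_divide; lia|].
  assert (Hpj := ppow_pos p j Hp).
  exists 1, (- r2), 0, 0, 1, 0, 0, 0, 0. cbv zeta. split.
  - intros x y z. split.
    + intros [t [Ht Hd]]. repeat split; [|exists t; rewrite Ht; ring|apply Z.divide_1_l].
      replace (1 * x + - r2 * y + 0 * z) with (x - Z.of_nat r * t) by (rewrite Ht, Er; ring). auto.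
    + intros [H1 [[t Ht] _]]. exists t. split; [nia|].
      replace (x - Z.of_nat r * t) with (1 * x + - r2 * y + 0 * z) by (rewrite Er; nia). auto.
  - intros w1 w2 w3. exists (w1 + r2 * w2), w2, 0.
    repeat split; try apply Z.divide_1_l; exists 0; ring.
Qed.

(** Case r = 0 and i < j: R/S ≅ Z/p^j ⊕ Z/p^i via x t^2 + y t + z ↦ (y, x). *)
Lemma code_cotype_zero_small i j : (i < j)%nat ->
  IsCotype (code_subring p i j 0) (ppow p j) (ppow p i) 1.
Proof.
  intros hij. split; [lia|]. split; [apply Z.divide_1_l|]. split; [apply ppow_divide; lia|].
  assert (Hpj := ppow_pos p j Hp).
  exists 0, 1, 0, 1, 0, 0, 0, 0, 0. cbv zeta. split.
  - intros x y z. split.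
    + intros [t [Ht Hd]]. repeat split; [exists t; rewrite Ht; ring| |apply Z.divide_1_l].
      replace (1 * x + 0 * y + 0 * z) with (x - Z.of_nat 0 * t) by ring. auto.
    + intros [[t Ht] [H1 _]]. exists t. split; [nia|].
      replace (x - Z.of_nat 0 * t) with (1 * x + 0 * y + 0 * z) by ring. auto.
  - intros w1 w2 w3. exists w2, w1, 0. repeat split; try apply Z.divide_1_l; exists 0; ring.
Qed.

(** Case v = v_p(r) < i, j, r = p^v w with w a unit mod p:
    R/S ≅ Z/p^{i+j-v} ⊕ Z/p^v via x t^2 + y t + z ↦ (y - w' p^{j-v} x, w' x),
    where w w' ≡ 1 (mod p^i). *)
Lemma code_cotype_unit_part i j r v w : prime p -> (v < i)%nat -> (v < j)%nat ->
  Z.of_nat r = ppow p v * w -> ~ (p | w) ->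
  IsCotype (code_subring p i j r) (ppow p (i + j - v)) (ppow p v) 1.
Proof.
  intros Hpr hvi hvj Er Nw. split; [lia|]. split; [apply Z.divide_1_l|]. split; [apply ppow_divide; lia|].
  set (A := ppow p v). set (B := ppow p (i - v)). set (Cc := ppow p (j - v)).
  assert (EA : ppow p i = A * B) by (unfold A, B; rewrite <- ppow_add; f_equal; lia).
  assert (EB : ppow p j = A * Cc) by (unfold A, Cc; rewrite <- ppow_add; f_equal; lia).
  assert (EC : ppow p (i + j - v) = A * B * Cc) by (unfold A, B, Cc; rewrite <- !ppow_add; f_equal; lia).
  rewrite EC. fold A. fold A in Er.
  assert (Hrp : rel_prime w (ppow p i)).
  { unfold ppow. apply Zpow_facts.rel_prime_Zpower_r; [lia|]. apply rel_prime_sym, prime_rel_prime; auto. }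
  destruct (rel_prime_bezout _ _ Hrp) as [w' v' Hb].
  assert (Hb2 : w * w' = 1 - v' * A * B) by (rewrite EA in Hb; lia).
  exists (- w' * Cc), 1, 0, w', 0, 0, 0, 0, 0. cbv zeta. split.
  - intros x y z. split.
    + intros [t [Ht [s Hs]]]. rewrite EA in Hs. rewrite EB in Ht.
      replace x with (Z.of_nat r * t + s * (A * B)) by lia. rewrite Ht, Er.
      repeat split; [|exists (w' * w * t + w' * B * s); ring|apply Z.divide_1_l].
      exists (A * t * v' - w' * s).
      replace (- w' * Cc * (A * w * t + s * (A * B)) + 1 * (A * Cc * t) + 0 * z)
        with (A * Cc * t * (1 - w * w') - w' * Cc * s * A * B) by ring.
      rewrite Hb2. ring.
    + intros [[d Hd] [[e He] _]].
      set (x1 := w * e + x * v' * B).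
      assert (Ex : x = A * x1).
      { unfold x1. replace x with (x * (w * w') + x * v' * A * B) at 1 by (rewrite Hb2; ring).
        replace (x * (w * w')) with (w * (w' * x + 0 * y + 0 * z)) by ring. rewrite He. ring. }
      exists (w' * x1 + B * d). split.
      * rewrite EB. replace y with ((- w' * Cc * x + 1 * y + 0 * z) + w' * Cc * x) by ring.
        rewrite Hd, Ex. ring.
      * rewrite EA. exists (x1 * v' * A - w * d). rewrite Ex, Er.
        replace (A * x1 - A * w * (w' * x1 + B * d)) with (A * x1 * (1 - w * w') - A * w * B * d) by ring.
        rewrite Hb2. ring.
  - intros W1 W2 W3. exists (w * W2), (W1 + w' * Cc * (w * W2)), 0. repeat split; try apply Z.divide_1_l.
    + exists 0. ring.
    + exists (- v' * B * W2).
      replace (w' * (w * W2) + 0 * (W1 + w' * Cc * (w * W2)) + 0 * 0 - W2) with ((w * w' - 1) * W2) by ring.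
      rewrite Hb2. ring.
Qed.

Lemma code_cotype i j r : prime p -> (r < Z.to_nat (ppow p i))%nat ->
  let m := cotype_exp i j (val p (Z.of_nat r)) in
  IsCotype (code_subring p i j r) (ppow p (i + j - m)) (ppow p m) 1.
Proof.
  intros Hpr hr m. unfold m, val. assert (Hpi := ppow_pos p i Hp).
  destruct (Z.eqb_spec (Z.of_nat r) 0) as [r0|r0]; simpl cotype_exp.
  - replace r with 0%nat by lia. destruct (le_lt_dec j i).
    + replace (Nat.min i j) with j by lia. replace (i + j - j)%nat with i by lia.
      apply (code_cotype_divisible i j 0 0); auto. rewrite Z.mul_0_r. reflexivity.
    + replace (Nat.min i j) with i by lia. replace (i + j - i)%nat with j by lia.
      apply code_cotype_zero_small; auto.
  - destruct (valuation_decomp p Hp (Z.of_nat r) r0) as [v [w [Er Nw]]].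
    rewrite (vp_spec p Hp _ v w Er Nw).
    assert (hv : (v < i)%nat).
    { destruct (le_lt_dec i v) as [h|h]; auto. exfalso.
      assert (ppow p i <= ppow p v) by (destruct (Nat.eq_dec i v); [subst; lia|apply Z.lt_le_incl, ppow_lt; auto; lia]).
      pose proof (ppow_pos p v Hp). assert (0 < w) by nia. nia. }
    destruct (le_lt_dec j v).
    + replace (Nat.min (Nat.min i j) v) with j by lia. replace (i + j - j)%nat with i by lia.
      apply (code_cotype_divisible i j r (ppow p (v - j) * w)); [lia|].
      rewrite Er, Z.mul_assoc, <- ppow_add. f_equal. f_equal. lia.
    + replace (Nat.min (Nat.min i j) v) with v by lia.
      apply (code_cotype_unit_part i j r v w); auto.
Qed.

End CodeSubrings.

Section Codes.
Local Open Scope Z_scope.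

(** The cotype of a set of p-power index is unique: it is determined by the
    invariants alpha_1, alpha_2 and alpha_3. *)
Lemma cotype_unique p K S a1 a2 a3 e1 e2 : prime p -> S 0 0 1 ->
  IsCotype S a1 a2 a3 -> IsCotype S (ppow p e1) (ppow p e2) 1 ->
  a1 * a2 * a3 = ppow p K -> 0 < a1 -> 0 < a2 ->
  a1 = ppow p e1 /\ a2 = ppow p e2 /\ a3 = 1.
Proof.
  intros Hp H001 Hc Hc' HK Ha1 Ha2. pose proof (prime_gt1 p Hp) as Hp1.
  pose proof (ppow_pos p e1 Hp1). pose proof (ppow_pos p e2 Hp1).
  assert (Ha2K : (a2 | ppow p K)) by (rewrite <- HK; exists (a1 * a3); ring).
  split; [|split].
  - apply Z.divide_antisym_nonneg; try lia.
    + apply (cotype_alpha1 _ _ _ _ Hc). apply (cotype_alpha1 _ _ _ _ Hc'). apply Z.divide_refl.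
    + apply (cotype_alpha1 _ _ _ _ Hc'). apply (cotype_alpha1 _ _ _ _ Hc). apply Z.divide_refl.
  - apply Z.divide_antisym_nonneg; try lia.
    + apply (cotype_alpha2 p K _ _ _ _ Hp Hc Ha2 Ha2K).
      apply (cotype_alpha2 p e2 _ _ _ _ Hp Hc'); auto using Z.divide_refl.
    + apply (cotype_alpha2 p e2 _ _ _ _ Hp Hc'); auto using Z.divide_refl.
      apply (cotype_alpha2 p K _ _ _ _ Hp Hc Ha2 Ha2K). apply Z.divide_refl.
  - pose proof (cotype_alpha3 _ _ _ _ Hc H001) as H3. destruct Hc as [Ha3 _].
    apply Z.divide_1_r in H3. lia.
Qed.

Definition valid_code (p : Z) (k : nat * nat * nat) : Prop :=
  let '(i, j, r) := k in (i <= 2 * j)%nat /\ (r < Z.to_nat (ppow p i))%nat.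

Definition code_index (p : Z) (k : nat * nat * nat) : subsetR * Z * Z * Z :=
  let '(i, j, r) := k in
  let m := cotype_exp i j (val p (Z.of_nat r)) in
  (code_subring p i j r, ppow p (i + j - m), ppow p m, 1).

Lemma code_index_valid p k : prime p -> valid_code p k -> ZetaIndex p (code_index p k).
Proof.
  intros Hp. destruct k as [[i j] r]. intros [h1 h2]. simpl. split; [|split].
  - apply code_subring_is_subring; auto.
  - apply code_cotype; auto. apply prime_gt1; auto.
  - exists (i + j)%nat. pose proof (cotype_exp_le i j (val p (Z.of_nat r))).
    fold (ppow p (i + j)). rewrite Z.mul_1_r, <- ppow_add. f_equal. lia.
Qed.

(** Distinct valid codes give distinct subrings: i, j and r are read off
    from the elements p^{i'} t^2 and r' t^2 + p^{j'} t. *)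
Lemma code_index_inj p k k' : 1 < p -> valid_code p k -> valid_code p k' ->
  code_index p k = code_index p k' -> k = k'.
Proof.
  intros Hp. destruct k as [[i j] r], k' as [[i' j'] r']. intros [h1 h2] [h1' h2'] E.
  simpl in E. injection E as ES _ _.
  assert (HS : forall x y z, code_subring p i j r x y z <-> code_subring p i' j' r' x y z)
    by (intros; rewrite ES; tauto).
  assert (Hx : forall a b c, code_subring p a b c (ppow p a) 0 0) by (intros; exists 0; split; [ring|exists 1; ring]).
  assert (Hy : forall a b c, code_subring p a b c (Z.of_nat c) (ppow p b) 0) by (intros; exists 1; split; [ring|exists 0; ring]).
  assert (Ei : i = i').
  { destruct (proj2 (HS _ _ _) (Hx i' j' r')) as [t [Ht Hd]]. destruct (proj1 (HS _ _ _) (Hx i j r)) as [t' [Ht' Hd']].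
    assert (t = 0) by (pose proof (ppow_pos p j Hp); nia). assert (t' = 0) by (pose proof (ppow_pos p j' Hp); nia). subst.
    rewrite Z.mul_0_r, Z.sub_0_r in Hd, Hd'. apply ppow_divide_le in Hd; auto. apply ppow_divide_le in Hd'; auto. lia. }
  subst i'.
  assert (Ej : j = j').
  { destruct (proj1 (HS _ _ _) (Hy i j r)) as [t [Ht _]]. destruct (proj2 (HS _ _ _) (Hy i j' r')) as [t' [Ht' _]].
    assert (D1 : (ppow p j' | ppow p j)) by (exists t; lia). assert (D2 : (ppow p j | ppow p j')) by (exists t'; lia).
    apply ppow_divide_le in D1; auto. apply ppow_divide_le in D2; auto. lia. }
  subst j'.
  destruct (proj1 (HS _ _ _) (Hy i j r)) as [t [Ht [q Hq]]].
  assert (t = 1) by (pose proof (ppow_pos p j Hp); nia). subst t.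
  assert (Z.of_nat r < ppow p i) by (pose proof (ppow_pos p i Hp); lia).
  assert (Z.of_nat r' < ppow p i) by (pose proof (ppow_pos p i Hp); lia).
  assert (q = 0) by nia. subst q. f_equal. lia.
Qed.

Lemma code_index_onto p t : prime p -> ZetaIndex p t ->
  (let '(_, a1, a2, _) := t in 0 < a1 /\ 0 < a2) ->
  exists k, valid_code p k /\ t = code_index p k.
Proof.
  intros Hp. destruct t as [[[S a1] a2] a3]. intros [Hsub [Hcot [K HK]]] [Ha1 Ha2].
  change (p ^ Z.of_nat K) with (ppow p K) in HK.
  destruct (subring_classification p S a1 a2 a3 K Hp Hsub Hcot HK) as [i [j [r [h1 [h2 HS]]]]].
  assert (ES : S = code_subring p i j r).
  { apply functional_extensionality; intros x. apply functional_extensionality; intros y.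
    apply functional_extensionality; intros z. apply propositional_extensionality. apply HS. }
  subst S. exists (i, j, r). split; [split; auto|].
  pose proof (code_cotype p (prime_gt1 p Hp) i j r Hp h2) as Hc'. cbv zeta in Hc'.
  destruct Hsub as [_ [_ [_ [H001 _]]]].
  destruct (cotype_unique p K _ _ _ _ _ _ Hp H001 Hcot Hc' HK Ha1 Ha2) as [-> [-> ->]].
  reflexivity.
Qed.

Definition code_value (p : Z) (s1 s2 : C) (k : nat * nat * nat) : C :=
  let '(i, j, r) := k in code_term p s1 s2 i j (val p (Z.of_nat r)).

Lemma zeta_term_code_index p s1 s2 k : ZetaTerm s1 s2 (code_index p k) = code_value p s1 s2 k.
Proof. destruct k as [[i j] r]. reflexivity. Qed.

Lemma zeta_term_nonzero s1 s2 t : ZetaTerm s1 s2 t <> RtoC 0 ->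
  (let '(_, a1, a2, _) := t in 0 < a1 /\ 0 < a2).
Proof.
  destruct t as [[[S a1] a2] a3]. unfold ZetaTerm. intros H. split.
  - destruct (Z_lt_le_dec 0 a1); auto. exfalso. apply H. rewrite rpowC_nonpos; [ring|]. apply IZR_le; auto.
  - destruct (Z_lt_le_dec 0 a2); auto. exfalso. apply H. rewrite (rpowC_nonpos (IZR a2)); [ring|]. apply IZR_le; auto.
Qed.

End Codes.

Section DuplicateFreeLists.

Lemma perm_split {T} (l1 l2 : list T) : NoDup l1 -> incl l1 l2 -> NoDup l2 ->
  exists l3, Permutation l2 (l1 ++ l3).
Proof.
  revert l2. induction l1 as [|a l1 IH]; intros l2 N1 I N2; [exists l2; reflexivity|].
  destruct (in_split a l2 (I a (or_introl eq_refl))) as [u [v ->]].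
  inversion N1; subst.
  destruct (IH (u ++ v)) as [l3 P]; auto.
  - intros x Hx. assert (Hin : In x (u ++ a :: v)) by (apply I; simpl; auto).
    apply in_app_or in Hin. apply in_or_app. destruct Hin as [H|[H|H]]; auto. subst. contradiction.
  - eapply NoDup_remove_1; eauto.
  - exists l3. simpl. rewrite <- P. symmetry. apply Permutation_middle.
Qed.

Lemma NoDup_app_disj {T} (l1 l2 : list T) x : NoDup (l1 ++ l2) -> In x l1 -> In x l2 -> False.
Proof.
  induction l1 as [|a l1 IH]; intros N H1 H2; [destruct H1|]. simpl in N. inversion N; subst.
  destruct H1 as [<-|H1]; [apply H3; apply in_or_app; auto|eauto].
Qed.

Lemma rsum_incl {T} (w : T -> R) (l l' : list T) : NoDup l -> incl l l' -> (forall x, 0 <= w x) ->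
  rsum_list w l <= rsum_list w l'.
Proof.
  revert l'. induction l as [|a l IH]; intros l' N I W; [apply rsum_nonneg; auto|].
  destruct (in_split a l' (I a (or_introl eq_refl))) as [u [v ->]].
  inversion N; subst.
  assert (rsum_list w l <= rsum_list w (u ++ v)).
  { apply IH; auto. intros x Hx. assert (Hin : In x (u ++ a :: v)) by (apply I; simpl; auto).
    apply in_app_or in Hin. apply in_or_app. destruct Hin as [H|[H|H]]; auto. subst. contradiction. }
  rewrite rsum_app in *. rewrite !rsum_cons. lra.
Qed.

Lemma NoDup_flat_map_disj {T U} (g : T -> list U) (l : list T) :
  NoDup l -> (forall x, NoDup (g x)) ->
  (forall x y z, In x l -> In y l -> In z (g x) -> In z (g y) -> x = y) ->
  NoDup (flat_map g l).
Proof.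
  induction l as [|a l IH]; intros N Ng D; simpl; [constructor|]. inversion N; subst. apply NoDup_app; auto.
  - apply IH; auto. intros; eapply D; simpl; eauto.
  - intros z Hz Hz2. apply in_flat_map in Hz2. destruct Hz2 as [y [Hy Hzy]].
    assert (a = y) by (eapply D; simpl; eauto). subst. contradiction.
Qed.

End DuplicateFreeLists.

(** ** Estimates on the zeta terms *)

Section TailEstimates.
Local Open Scope R_scope.
Variable p : Z.
Hypothesis Hp : (1 < p)%Z.

Definition codes_below (n : nat) : list (nat * nat * nat) :=
  flat_map (fun i => flat_map (fun j =>
    if (i <=? 2 * j)%nat then map (fun r => (i, j, r)) (seq 0 (Z.to_nat (ppow p i))) else [])
    (seq 0 n)) (seq 0 n).

Lemma in_codes_below n i j r :
  In (i, j, r) (codes_below n) <-> ((i < n)%nat /\ (j < n)%nat /\ valid_code p (i, j, r)).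
Proof.
  unfold codes_below, valid_code. rewrite in_flat_map. split.
  - intros [i' [Hi' H]]. rewrite in_flat_map in H. destruct H as [j' [Hj' H]].
    destruct (Nat.leb_spec i' (2 * j')); [|destruct H].
    apply in_map_iff in H. destruct H as [r' [E Hr]]. injection E; intros; subst.
    apply in_seq in Hi', Hj', Hr. repeat split; lia.
  - intros [h1 [h2 [h3 h4]]]. exists i. split; [apply in_seq; lia|]. rewrite in_flat_map.
    exists j. split; [apply in_seq; lia|].
    destruct (Nat.leb_spec i (2 * j)); [|lia]. apply in_map_iff. exists r. split; auto. apply in_seq; lia.
Qed.

Lemma codes_below_valid n k : In k (codes_below n) -> valid_code p k.
Proof. destruct k as [[i j] r]. intros H. apply in_codes_below in H. tauto. Qed.

Lemma codes_below_mono n m : (n <= m)%nat -> incl (codes_below n) (codes_below m).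
Proof. intros h [[i j] r] H. apply in_codes_below in H. apply in_codes_below. intuition lia. Qed.

Lemma codes_below_NoDup n : NoDup (codes_below n).
Proof.
  unfold codes_below. apply NoDup_flat_map_disj; [apply seq_NoDup| |].
  - intros i. apply NoDup_flat_map_disj; [apply seq_NoDup| |].
    + intros j. destruct (i <=? 2 * j)%nat; [|constructor].
      apply FinFun.Injective_map_NoDup_in; [|apply seq_NoDup]. intros x y _ _ E. injection E; auto.
    + intros x y z _ _ H1 H2. destruct (i <=? 2 * x)%nat; [|destruct H1]. destruct (i <=? 2 * y)%nat; [|destruct H2].
      apply in_map_iff in H1, H2. destruct H1 as [r1 [<- _]]. destruct H2 as [r2 [E2 _]]. injection E2; auto.
  - intros x y z _ _ H1 H2. apply in_flat_map in H1, H2. destruct H1 as [j1 [_ H1]]. destruct H2 as [j2 [_ H2]].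
    destruct (x <=? 2 * j1)%nat; [|destruct H1]. destruct (y <=? 2 * j2)%nat; [|destruct H2].
    apply in_map_iff in H1, H2. destruct H1 as [r1 [<- _]]. destruct H2 as [r2 [E2 _]]. injection E2; auto.
Qed.

Lemma codes_below_cover (Ks : list (nat * nat * nat)) : (forall k, In k Ks -> valid_code p k) ->
  exists M, incl Ks (codes_below M).
Proof.
  induction Ks as [|[[i j] r] Ks IH]; intros Hv; [exists 0%nat; intros x []|].
  destruct IH as [M HM]; [intros; apply Hv; simpl; auto|].
  exists (Nat.max M (S (Nat.max i j))). intros x [<-|Hx].
  - apply in_codes_below. split; [lia|split; [lia|]]. apply Hv; simpl; auto.
  - eapply codes_below_mono; [|apply HM; exact Hx]. lia.
Qed.

Lemma zeta_partial_codes s1 s2 n : csum_list (code_value p s1 s2) (codes_below n) = zeta_partial p s1 s2 n.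
Proof.
  unfold codes_below, zeta_partial. rewrite csum_flat_map. apply csum_ext. intros i _.
  rewrite csum_flat_map. apply csum_ext. intros j _. destruct (i <=? 2 * j)%nat; [|reflexivity].
  rewrite csum_map. reflexivity.
Qed.

(** Sums of a function of (i, j) over the codes: each (i, j) occurs p^i times. *)
Lemma rsum_codes_below (h : nat -> nat -> R) n :
  rsum_list (fun k => let '(i, j, _) := k in h i j) (codes_below n) =
  rsum_nat n (fun i => rsum_nat n (fun j => if (i <=? 2 * j)%nat then IZR p ^ i * h i j else 0)).
Proof.
  unfold codes_below, rsum_nat. rewrite rsum_flat_map. apply rsum_ext. intros i _.
  rewrite rsum_flat_map. apply rsum_ext. intros j _. destruct (i <=? 2 * j)%nat; [|reflexivity].
  rewrite rsum_map. fold (rsum_nat (Z.to_nat (ppow p i)) (fun _ => h i j)). rewrite rsum_nat_const.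
  rewrite INR_IZR_INZ, Z2Nat.id by (pose proof (ppow_pos p i Hp); lia). rewrite IZR_ppow. reflexivity.
Qed.

Definition term_bound (i j : nat) : R := / IZR p ^ (3 * (i + j)).

Lemma exp_mono_le x y : x <= y -> exp x <= exp y.
Proof. intros H. destruct (Req_dec x y) as [->|]; [lra|]. left; apply exp_increasing; lra. Qed.

Lemma Cmod_rpow_ppow k s : 3 < Re s -> Cmod (rpowC (IZR (ppow p k)) (- s)) <= / IZR p ^ (3 * k).
Proof.
  intros Hs. rewrite rpowC_pos by (rewrite IZR_ppow; apply powp_pos; auto).
  rewrite Cmod_cexp, re_scal_l, re_opp, (ln_ppow p Hp).
  rewrite <- pow_inv, <- (exp_ln (/ IZR p)) by (apply Rinv_0_lt_compat, IZRp_pos; auto).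
  rewrite <- (exp_ln (exp (ln (/ IZR p)) ^ (3 * k))) by (apply pow_lt, exp_pos).
  apply exp_mono_le. rewrite ln_pow, ln_exp, ln_Rinv, mult_INR by (try apply exp_pos; apply IZRp_pos; auto).
  simpl INR.
  assert (0 <= ln (IZR p)) by (rewrite <- ln_1; apply ln_le; [lra|left; apply IZRp_gt1; auto]).
  assert (0 <= INR k) by apply pos_INR. assert (0 <= INR k * ln (IZR p)) by (apply Rmult_le_pos; auto). nra.
Qed.

Lemma code_value_bound s1 s2 i j r : 3 < Re s1 -> 3 < Re s2 ->
  Cmod (code_value p s1 s2 (i, j, r)) <= term_bound i j.
Proof.
  intros H1 H2. unfold code_value, code_term, term_bound. rewrite Cmod_mult.
  pose proof (cotype_exp_le i j (val p (Z.of_nat r))). set (m := cotype_exp i j _) in *.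
  replace (3 * (i + j))%nat with (3 * (i + j - m) + 3 * m)%nat by lia.
  rewrite pow_add, Rinv_mult. apply Rmult_le_compat; try apply Cmod_ge_0; apply Cmod_rpow_ppow; auto.
Qed.

(** p^i p^{-3(i+j)} <= 2^{-max(i,j)} 2^{-i} 4^{-j}: the codes with max(i, j) >= N
    contribute a tail of size O(2^{-N}). *)
Lemma term_bound_geometric N i j : (N <= Nat.max i j)%nat ->
  IZR p ^ i * term_bound i j <= (/ 2) ^ N * ((/ 2) ^ i * (/ 4) ^ j).
Proof.
  intros h. unfold term_bound. rewrite !pow_inv. set (P := IZR p).
  assert (P2 : 2 <= P) by (unfold P; apply IZR_le; lia).
  assert (E : P ^ i * / P ^ (3 * (i + j)) = / (P ^ (2 * i) * P ^ (3 * j))).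
  { replace (3 * (i + j))%nat with (i + (2 * i + 3 * j))%nat by lia. rewrite !pow_add.
    assert (0 < P ^ i) by (apply pow_lt; lra). assert (0 < P ^ (2 * i)) by (apply pow_lt; lra).
    assert (0 < P ^ (3 * j)) by (apply pow_lt; lra). field. lra. }
  rewrite E, <- !Rinv_mult. apply Rinv_le_contravar; [repeat apply Rmult_lt_0_compat; apply pow_lt; lra|].
  replace 4 with (2 ^ 2) by (simpl; lra). rewrite <- pow_mult.
  apply Rle_trans with (2 ^ (i + j) * (2 ^ i * 2 ^ (2 * j))).
  - apply Rmult_le_compat_r; [apply Rmult_le_pos; apply pow_le; lra|]. apply Rle_pow; lia || lra.
  - rewrite <- !pow_add. replace (i + j + (i + 2 * j))%nat with (2 * i + 3 * j)%nat by lia.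
    apply pow_incr; lra.
Qed.

Definition tail_bound (N : nat) (k : nat * nat * nat) : R :=
  let '(i, j, _) := k in if (N <=? Nat.max i j)%nat then term_bound i j else 0.

Lemma tail_bound_nonneg N k : 0 <= tail_bound N k.
Proof.
  destruct k as [[i j] r]. unfold tail_bound, term_bound. destruct (N <=? Nat.max i j)%nat; [|lra].
  left. apply invpow_pos; auto.
Qed.

Lemma tail_bound_sum N M : rsum_list (tail_bound N) (codes_below M) <= 4 * / 2 ^ N.
Proof.
  unfold tail_bound. rewrite (rsum_codes_below (fun i j => if (N <=? Nat.max i j)%nat then term_bound i j else 0)).
  apply Rle_trans with (rsum_nat M (fun i => rsum_nat M (fun j => (/ 2) ^ N * ((/ 2) ^ i * (/ 4) ^ j)))).
  - apply rsum_nat_le. intros i _. apply rsum_nat_le. intros j _.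
    assert (0 <= (/ 2) ^ N * ((/ 2) ^ i * (/ 4) ^ j)) by (repeat apply Rmult_le_pos; apply pow_le; lra).
    destruct (i <=? 2 * j)%nat; auto. destruct (Nat.leb_spec N (Nat.max i j)).
    + apply term_bound_geometric; auto.
    + rewrite Rmult_0_r. auto.
  - replace (rsum_nat M (fun i => rsum_nat M (fun j => (/ 2) ^ N * ((/ 2) ^ i * (/ 4) ^ j))))
      with ((/ 2) ^ N * (rsum_nat M (fun i => (/ 2) ^ i) * rsum_nat M (fun j => (/ 4) ^ j))).
    + pose proof (geom_sum_le2 (/ 2) M ltac:(lra)). pose proof (geom_sum_le2 (/ 4) M ltac:(lra)).
      assert (0 <= rsum_nat M (fun j => (/ 4) ^ j)) by (apply rsum_nonneg; intros; apply pow_le; lra).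
      assert (0 <= rsum_nat M (fun j => (/ 2) ^ j)) by (apply rsum_nonneg; intros; apply pow_le; lra).
      assert (rsum_nat M (fun i => (/ 2) ^ i) * rsum_nat M (fun j => (/ 4) ^ j) <= 4) by nra.
      rewrite pow_inv. assert (0 < / 2 ^ N) by (apply Rinv_0_lt_compat, pow_lt; lra). nra.
    + unfold rsum_nat. set (B := rsum_list (fun j => (/ 4) ^ j) (seq 0 M)).
      symmetry. rewrite (rsum_ext _ (fun i => ((/ 2) ^ N * B) * (/ 2) ^ i)).
      * rewrite <- (rsum_scal _ (fun i => (/ 2) ^ i)). ring.
      * intros i _. replace ((/ 2) ^ N * B * (/ 2) ^ i) with (((/ 2) ^ N * (/ 2) ^ i) * B) by ring.
        unfold B. rewrite rsum_scal. apply rsum_ext. intros j _. ring.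
Qed.

Lemma zeta_tail s1 s2 N Ks : 3 < Re s1 -> 3 < Re s2 -> NoDup Ks ->
  (forall k, In k Ks -> valid_code p k /\ ~ In k (codes_below N)) ->
  rsum_list (fun k => Cmod (code_value p s1 s2 k)) Ks <= 4 * / 2 ^ N.
Proof.
  intros H1 H2 ND Hk. destruct (codes_below_cover Ks) as [M HM]; [intros; apply Hk; auto|].
  apply Rle_trans with (rsum_list (tail_bound N) Ks).
  - apply rsum_le. intros [[i j] r] Hin. destruct (Hk _ Hin) as [Hv Hn]. unfold tail_bound.
    destruct (Nat.leb_spec N (Nat.max i j)); [apply code_value_bound; auto|].
    exfalso. apply Hn. apply in_codes_below. split; [lia|split; [lia|auto]].
  - apply Rle_trans with (rsum_list (tail_bound N) (codes_below M)); [|apply tail_bound_sum].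
    apply rsum_incl; auto. apply tail_bound_nonneg.
Qed.

(** The partial sums are Cauchy: their differences are sums over tails. *)
Lemma zeta_partial_cauchy s1 s2 n m : 3 < Re s1 -> 3 < Re s2 -> (n <= m)%nat ->
  Cmod (zeta_partial p s1 s2 m - zeta_partial p s1 s2 n) <= 4 * / 2 ^ n.
Proof.
  intros H1 H2 h.
  destruct (perm_split (codes_below n) (codes_below m)) as [l3 P];
    [apply codes_below_NoDup|apply codes_below_mono; auto|apply codes_below_NoDup|].
  assert (ND : NoDup (codes_below n ++ l3)) by (eapply Permutation_NoDup; eauto; apply codes_below_NoDup).
  rewrite <- !zeta_partial_codes, (csum_perm _ _ _ P), csum_app.
  replace (csum_list (code_value p s1 s2) (codes_below n) + csum_list (code_value p s1 s2) l3
           - csum_list (code_value p s1 s2) (codes_below n))%C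
    with (csum_list (code_value p s1 s2) l3) by ring.
  eapply Rle_trans; [apply Cmod_csum|]. apply zeta_tail; auto; [eapply NoDup_app_remove_l; eauto|].
  intros k Hk. split.
  - apply (codes_below_valid m). apply (Permutation_in _ (Permutation_sym P)). apply in_or_app; auto.
  - intros Hn. eapply NoDup_app_disj; eauto.
Qed.

End TailEstimates.

Section Limits.
Local Open Scope R_scope.

Lemma INR_le_pow2 n : INR n <= 2 ^ n.
Proof.
  induction n as [|n IH]; [simpl; lra|]. rewrite S_INR. simpl.
  assert (1 <= 2 ^ n) by (apply pow_R1_Rle; lra). lra.
Qed.

Lemma inv_pow2_le N n : (N <= n)%nat -> / 2 ^ n <= / 2 ^ N.
Proof. intros h. apply Rinv_le_contravar; [apply pow_lt; lra|]. apply Rle_pow; auto; lra. Qed.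

Lemma inv_pow2_small c eps : 0 < eps -> exists N, c * / 2 ^ N < eps.
Proof.
  intros He. set (x := Rabs c / eps). destruct (archimed x) as [H1 _].
  assert (0 <= x) by (unfold x; apply Rmult_le_pos; [apply Rabs_pos|left; apply Rinv_0_lt_compat; auto]).
  assert (Hup : (0 <= up x)%Z) by (apply le_IZR; lra).
  exists (Z.to_nat (up x)).
  assert (E : INR (Z.to_nat (up x)) = IZR (up x)) by (rewrite INR_IZR_INZ, Z2Nat.id; auto).
  pose proof (INR_le_pow2 (Z.to_nat (up x))). set (P := 2 ^ Z.to_nat (up x)) in *.
  assert (P > x) by lra. assert (0 < P) by lra.
  apply Rle_lt_trans with (Rabs c * / P); [apply Rmult_le_compat_r; [left; apply Rinv_0_lt_compat; auto|apply Rle_abs]|].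
  unfold x in *. apply (Rmult_lt_reg_r P); auto. rewrite Rmult_assoc, Rinv_l by lra.
  apply (Rmult_lt_reg_r (/ eps)); [apply Rinv_0_lt_compat; auto|].
  replace (eps * P * / eps) with P by (field; lra). lra.
Qed.

Lemma real_limit (u : nat -> R) : (forall n m, (n <= m)%nat -> Rabs (u m - u n) <= 4 * / 2 ^ n) ->
  exists l, forall n, Rabs (u n - l) <= 4 * / 2 ^ n.
Proof.
  intros Hc.
  assert (Cc : Cauchy_crit u).
  { intros eps He. destruct (inv_pow2_small 4 eps He) as [N HN]. exists N. intros n m hn hm. unfold Rdist.
    destruct (le_ge_dec n m) as [h|h]; [rewrite Rabs_minus_sym|];
      (eapply Rle_lt_trans; [apply Hc; lia|]); eapply Rle_lt_trans; try exact HN;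
      apply Rmult_le_compat_l; try lra; apply inv_pow2_le; lia. }
  destruct (Rcomplete.R_complete u Cc) as [l Hl]. exists l. intros n.
  destruct (Rle_dec (Rabs (u n - l)) (4 * / 2 ^ n)) as [h|h]; auto. exfalso.
  set (e := Rabs (u n - l) - 4 * / 2 ^ n). assert (e > 0) by (unfold e; lra).
  destruct (Hl e H) as [N HN]. specialize (HN (Nat.max n N) ltac:(lia)). unfold Rdist in HN.
  specialize (Hc n (Nat.max n N) ltac:(lia)).
  assert (Rabs (u n - l) <= Rabs (u (Nat.max n N) - u n) + Rabs (u (Nat.max n N) - l)).
  { replace (u n - l) with (- (u (Nat.max n N) - u n) + (u (Nat.max n N) - l)) by ring.
    eapply Rle_trans; [apply Rabs_triang|]. rewrite Rabs_Ropp. lra. }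
  unfold e in HN. lra.
Qed.

(** |z| <= |Re z| + |Im z|, to combine the limits of real and imaginary parts. *)
Lemma Cmod_le_re_im z : Cmod z <= Rabs (Re z) + Rabs (Im z).
Proof.
  destruct z as [a b]. unfold Cmod. simpl.
  pose proof (Rabs_pos a). pose proof (Rabs_pos b). pose proof (Rsqr_abs a). pose proof (Rsqr_abs b). unfold Rsqr in *.
  rewrite <- (sqrt_square (Rabs a + Rabs b)) by lra. apply sqrt_le_1_alt. nra.
Qed.

Lemma zeta_partial_limit p s1 s2 : (1 < p)%Z -> 3 < Re s1 -> 3 < Re s2 ->
  exists L, forall n, Cmod (zeta_partial p s1 s2 n - L) <= 8 * / 2 ^ n.
Proof.
  intros Hp H1 H2. set (Z := zeta_partial p s1 s2).
  destruct (real_limit (fun n => Re (Z n))) as [lr Hr].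
  { intros n m h. eapply Rle_trans; [|apply (zeta_partial_cauchy p Hp s1 s2 n m); auto].
    replace (Re (Z m) - Re (Z n)) with (Re (Z m - Z n)) by (unfold Cminus; rewrite re_plus, re_opp; ring).
    apply re_le_Cmod. }
  destruct (real_limit (fun n => Im (Z n))) as [li Hi].
  { intros n m h. eapply Rle_trans; [|apply (zeta_partial_cauchy p Hp s1 s2 n m); auto].
    replace (Im (Z m) - Im (Z n)) with (Im (Z m - Z n)) by (unfold Cminus; rewrite im_plus, im_opp; ring).
    eapply Rle_trans; [apply Rmax_r|apply Rmax_Cmod]. }
  exists (lr, li). intros n. eapply Rle_trans; [apply Cmod_le_re_im|].
  replace (Re (Z n - (lr, li))) with (Re (Z n) - lr) by (unfold Cminus; rewrite re_plus, re_opp; reflexivity).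
  replace (Im (Z n - (lr, li))) with (Im (Z n) - li) by (unfold Cminus; rewrite im_plus, im_opp; reflexivity).
  specialize (Hr n). specialize (Hi n). lra.
Qed.

End Limits.

Section MainSteps.
Local Open Scope R_scope.
Variables (p : Z) (s1 s2 : C).
Hypotheses (hp : prime p) (H1 : 3 < Re s1) (H2 : 3 < Re s2).

(** Finitely many indices outside the first N levels: dropping the zero
    terms, they are the images of distinct valid codes outside
    [codes_below N], so their absolute sum obeys the tail estimate. *)
Lemma index_tail_bound N l : NoDup l ->
  (forall t, In t l -> ZetaIndex p t /\ ~ In t (map (code_index p) (codes_below p N))) ->
  Cmod (csum_list (ZetaTerm s1 s2) l) <= 4 * / 2 ^ N.
Proof.
  intros ND Hl. eapply Rle_trans; [apply Cmod_csum|].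
  assert (Hcodes : exists Ks, NoDup Ks /\ (forall k, In k Ks -> valid_code p k /\ ~ In k (codes_below p N)) /\
    rsum_list (fun t => Cmod (ZetaTerm s1 s2 t)) l = rsum_list (fun k => Cmod (code_value p s1 s2 k)) Ks /\
    (forall k, In k Ks -> In (code_index p k) l)).
  { induction l as [|t l IH]; [exists []; split; [constructor|split; [intros k []|split; [reflexivity|intros k []]]]|].
    inversion ND; subst.
    destruct IH as [Ks [N1 [N2 [N3 N4]]]]; auto; [intros; apply Hl; simpl; auto|].
    destruct (classic (ZetaTerm s1 s2 t = RtoC 0)) as [Z0|Z0].
    - exists Ks. split; [auto|split; [auto|split]].
      + rewrite rsum_cons, N3, Z0, Cmod_0. ring.
      + intros k Hk. simpl. auto.
    - destruct (Hl t (or_introl eq_refl)) as [Hzi Hnot].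
      destruct (code_index_onto p t hp Hzi (zeta_term_nonzero s1 s2 t Z0)) as [k [Hv ->]].
      exists (k :: Ks). split; [|split; [|split]].
      + apply NoDup_cons; [|exact N1]. intros Hin. apply N4 in Hin. contradiction.
      + intros k' [<-|E]; [|apply N2; auto]. split; auto. intros Hin. apply Hnot. apply in_map. auto.
      + rewrite !rsum_cons, N3, zeta_term_code_index. reflexivity.
      + intros k' [<-|E]; simpl; auto. }
  destruct Hcodes as [Ks [K1 [K2 [K3 _]]]]. rewrite K3. apply zeta_tail; auto. apply prime_gt1; auto.
Qed.

Lemma haar_integral_limit L : (forall n, Cmod (zeta_partial p s1 s2 n - L) <= 8 * / 2 ^ n) ->
  HaarIntegral p s1 s2 (RtoC ((1 - / IZR p) ^ 2) * L).
Proof.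
  intros HL eps He. destruct (inv_pow2_small 8 eps He) as [N HN]. exists N. intros n hn.
  set (c := (1 - / IZR p) ^ 2).
  assert (Hc : 0 < c <= 1).
  { pose proof (IZRp_gt1 p (prime_gt1 p hp)).
    assert (0 < / IZR p < 1) by (split; [apply Rinv_0_lt_compat; lra|rewrite <- Rinv_1; apply Rinv_lt_contravar; lra]).
    unfold c. split; [apply pow_lt; lra|simpl; nra]. }
  rewrite riemann_sum_partial_zeta by (apply prime_gt1; auto). fold c.
  replace (RtoC c * zeta_partial p s1 s2 n - RtoC c * L)%C with (RtoC c * (zeta_partial p s1 s2 n - L))%C by ring.
  rewrite Cmod_mult, Cmod_R, Rabs_right by lra.
  eapply Rle_lt_trans; [|exact HN].
  apply Rle_trans with (1 * (8 * / 2 ^ n)); [apply Rmult_le_compat; auto; try lra; apply Cmod_ge_0|].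
  rewrite Rmult_1_l. apply Rmult_le_compat_l; [lra|]. apply inv_pow2_le; auto.
Qed.

(** If the partial sums converge to L, the zeta terms are summable with sum L:
    the images of [codes_below N] form the required finite set. *)
Lemma zeta_has_sum L : (forall n, Cmod (zeta_partial p s1 s2 n - L) <= 8 * / 2 ^ n) ->
  HasSum (ZetaIndex p) (ZetaTerm s1 s2) L.
Proof.
  intros HL eps He. destruct (inv_pow2_small 12 eps He) as [N HN].
  pose proof (prime_gt1 p hp) as Hp.
  assert (ND0 : NoDup (map (code_index p) (codes_below p N))).
  { apply FinFun.Injective_map_NoDup_in; [|apply codes_below_NoDup].
    intros x y Hx Hy E. apply (code_index_inj p x y Hp); auto; eapply codes_below_valid; eauto. }
  exists (map (code_index p) (codes_below p N)). split; [exact ND0|split].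
  - intros t Ht. apply in_map_iff in Ht. destruct Ht as [k [<- Hk]].
    apply code_index_valid; auto. eapply codes_below_valid; eauto.
  - intros F NF HF Hincl. destruct (perm_split _ _ ND0 Hincl NF) as [l3 P].
    assert (NDa : NoDup (map (code_index p) (codes_below p N) ++ l3)) by (eapply Permutation_NoDup; eauto).
    rewrite (csum_perm _ _ _ P), csum_app, csum_map.
    rewrite (csum_ext _ (code_value p s1 s2)) by (intros; apply zeta_term_code_index).
    rewrite zeta_partial_codes.
    replace (zeta_partial p s1 s2 N + csum_list (ZetaTerm s1 s2) l3 - L)%C
      with ((zeta_partial p s1 s2 N - L) + csum_list (ZetaTerm s1 s2) l3)%C by ring.
    eapply Rle_lt_trans; [apply Cmod_triangle|].
    assert (A2 : Cmod (csum_list (ZetaTerm s1 s2) l3) <= 4 * / 2 ^ N).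
    { apply index_tail_bound; [eapply NoDup_app_remove_l; eauto|]. intros t Ht. split.
      - apply HF. apply (Permutation_in _ (Permutation_sym P)). apply in_or_app; auto.
      - intros Hin. eapply NoDup_app_disj; eauto. }
    pose proof (HL N). lra.
Qed.

End MainSteps.

Local Open Scope R_scope.

Theorem proposition4 (p : Z) (hp : prime p) :
  exists B : R, forall s1 s2 : C, B < Re s1 -> B < Re s2 ->
    exists I : C,
      HaarIntegral p s1 s2 I /\
      HasSum (ZetaIndex p) (ZetaTerm s1 s2)
        (Cmult (RtoC (/ (1 - / IZR p) ^ 2)) I).
Proof.
  exists 3. intros s1 s2 H1 H2.
  destruct (zeta_partial_limit p s1 s2 (prime_gt1 p hp) H1 H2) as [L HL].
  exists (RtoC ((1 - / IZR p) ^ 2) * L)%C. split.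
  - apply haar_integral_limit; auto.
  - replace (RtoC (/ (1 - / IZR p) ^ 2) * (RtoC ((1 - / IZR p) ^ 2) * L))%C with L.
    + apply zeta_has_sum; auto.
    + assert (/ IZR p < 1) by (pose proof (IZRp_gt1 p (prime_gt1 p hp));
                               rewrite <- Rinv_1; apply Rinv_lt_contravar; lra).
      rewrite Cmult_assoc, <- RtoC_mult, Rinv_l by (apply pow_nonzero; lra). ring.
Qed.
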